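(* Let $P$ be a planar cyclic polygon with positive edge lengths $l_1,\dots,l_n$ such that (1) no two consecutive vertices are antipodal with respect to the circumscribed circle, and (2) $P$ does not lie on a straight line. Then $P$ is a nondegenerate (Morse) critical point of the oriented area $\mathcal A$ on $\mathbf L(l_1,\dots,l_n)$ if and only if $P$ is not a bifurcating polygon, i.e. iff $\sum_{i=1}^n\varepsilon_i\tan\alpha_i\neq0$.
   Context: $\mathbf L(l_1,\dots,l_n)$ is the space of planar polygons (closed broken lines with cyclically numbered vertices $v_1,\dots,v_n$) with $|v_iv_{i+1}|=l_i$, modulo translations and rotations. The oriented area is $\mathcal A=\frac12\sum_i(x_iy_{i+1}-x_{i+1}y_i)$ for $v_i=(x_i,y_i)$. A polygon is cyclic if all vertices lie on a circle with center $O$. $\alpha_i$ is half of the unoriented positive angle between $\overrightarrow{Ov_i}$ and $\overrightarrow{Ov_{i+1}}$; $\varepsilon_i=1$ if $O$ lies to the left of $\overrightarrow{v_iv_{i+1}}$ and $-1$ if to the right. $P$ is bifurcating if $\sum_{i=1}^n\varepsilon_i\tan\alpha_i=0$. *)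

From Stdlib Require Import Reals Lra.
Open Scope R_scope.

Fixpoint rsum (n : nat) (f : nat -> R) : R :=
  match n with O => 0 | S k => rsum k f + f k end.

(** Polygons with n cyclically numbered vertices v_0, ..., v_{n-1} in R^2
    (values at indices >= n are irrelevant). *)
Definition config := nat -> (R * R).

Definition next (n i : nat) : nat := Nat.modulo (S i) n.

Definition dist (p q : R * R) : R :=
  sqrt ((fst p - fst q) ^ 2 + (snd p - snd q) ^ 2).

Definition agree (n : nat) (v w : config) : Prop :=
  forall i, (i < n)%nat -> v i = w i.

(** The (unquotiented) polygon space: |v_i v_{i+1}| = l_i for all i. *)
Definition in_L (n : nat) (l : nat -> R) (v : config) : Prop :=
  forall i, (i < n)%nat -> dist (v i) (v (next n i)) = l i.

Definition area (n : nat) (v : config) : R :=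
  / 2 * rsum n (fun i => fst (v i) * snd (v (next n i))
                        - fst (v (next n i)) * snd (v i)).

Definition curve_vel (n : nat) (g g1 : R -> config) : Prop :=
  exists g2 : R -> config,
    forall i, (i < n)%nat -> forall t,
      derivable_pt_lim (fun s => fst (g s i)) t (fst (g1 t i)) /\
      derivable_pt_lim (fun s => snd (g s i)) t (snd (g1 t i)) /\
      derivable_pt_lim (fun s => fst (g1 s i)) t (fst (g2 t i)) /\
      derivable_pt_lim (fun s => snd (g1 s i)) t (snd (g2 t i)).

Definition adm (n : nat) (l : nat -> R) (P : config) (g : R -> config)
    (w : config) : Prop :=
  exists g1, curve_vel n g g1 /\ (forall t, in_L n l (g t)) /\
    agree n (g 0) P /\ agree n (g1 0) w.

Definition tangent (n : nat) (l : nat -> R) (P w : config) : Prop :=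
  exists g, adm n l P g w.

Definition has_d2_at0 (f : R -> R) (c : R) : Prop :=
  exists f' : R -> R, (forall t, derivable_pt_lim f t (f' t)) /\
    derivable_pt_lim f' 0 c.

Definition area_critical (n : nat) (l : nat -> R) (P : config) : Prop :=
  forall g w, adm n l P g w ->
    derivable_pt_lim (fun t => area n (g t)) 0 0.

(** Hessian quadratic form of the restricted area at P:
    hessQ w q  means  q = (A o g)''(0) for some admissible curve g
    through P with velocity w (well defined at critical points). *)
Definition hessQ (n : nat) (l : nat -> R) (P w : config) (q : R) : Prop :=
  exists g, adm n l P g w /\ has_d2_at0 (fun t => area n (g t)) q.

Definition vadd (v w : config) : config :=
  fun i => (fst (v i) + fst (w i), snd (v i) + snd (w i)).

(** w is a tangent vector in the kernel of the (polarized) Hessian form. *)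
Definition hess_kernel (n : nat) (l : nat -> R) (P w : config) : Prop :=
  tangent n l P w /\
  forall u qw qu qwu, hessQ n l P w qw -> hessQ n l P u qu ->
    hessQ n l P (vadd w u) qwu -> qwu = qw + qu.

(** Tangent vectors to the orbit of P under translations and rotations. *)
Definition orbit_tangent (n : nat) (P w : config) : Prop :=
  exists a b c : R, forall i, (i < n)%nat ->
    w i = (a - c * snd (P i), b + c * fst (P i)).

(** P is a nondegenerate (Morse) critical point of the area on the quotient
    L(l_1..l_n) = {polygons}/(translations, rotations): it is critical, and
    the kernel of the Hessian on the unquotiented space is exactly the
    tangent space of the orbit. *)
Definition morse_critical (n : nat) (l : nat -> R) (P : config) : Prop :=
  area_critical n l P /\
  forall w, hess_kernel n l P w <-> orbit_tangent n P w.

Definition on_circle (n : nat) (P : config) (O : R * R) (r : R) : Prop :=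
  0 < r /\ forall i, (i < n)%nat -> dist O (P i) = r.

Definition antipode (O p : R * R) : R * R :=
  (2 * fst O - fst p, 2 * snd O - snd p).

Definition collinear (n : nat) (P : config) : Prop :=
  exists a b c : R, (a <> 0 \/ b <> 0) /\
    forall i, (i < n)%nat -> a * fst (P i) + b * snd (P i) = c.

Definition uangle (u v : R * R) : R :=
  acos ((fst u * fst v + snd u * snd v) /
        (sqrt (fst u ^ 2 + snd u ^ 2) * sqrt (fst v ^ 2 + snd v ^ 2))).

Definition vsub (p q : R * R) : R * R := (fst p - fst q, snd p - snd q).

Definition alpha (n : nat) (O : R * R) (P : config) (i : nat) : R :=
  uangle (vsub (P i) O) (vsub (P (next n i)) O) / 2.

(** eps_i = 1 if O lies to the left of v_i -> v_{i+1}, -1 if to the right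
    (O on the line is excluded by the non-antipodality hypothesis). *)
Definition cross (u v : R * R) : R := fst u * snd v - snd u * fst v.

Definition eps (n : nat) (O : R * R) (P : config) (i : nat) : R :=
  if Rlt_dec 0 (cross (vsub (P (next n i)) (P i)) (vsub O (P i)))
  then 1 else -1.

Definition bifurcating (n : nat) (O : R * R) (P : config) : Prop :=
  rsum n (fun i => eps n O P i * tan (alpha n O P i)) = 0.

From Pilot Require Import Defs.
From Stdlib Require Import Reals Lra Lia Psatz ClassicalEpsilon.
Open Scope R_scope.

(** Centre the circle at the origin and let [e_i = v_(i+1) - v_i]. On a circle the chord [e_i] is
    orthogonal to [v_i + v_(i+1)], so [v_i + v_(i+1) = m_i J e_i] with [J] the rotation by a right
    angle. Hence the differential of the area is a combination of the derivatives of the squared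
    edge lengths, [P] is critical, and the second derivative along a curve with velocity [w] is
    [Q(w) = 1/2 sum m_i |w_(i+1) - w_i|^2 + 2 A(w)]. A tangent vector [w] turns each edge with an
    angular velocity [phi_i(w)], and the polar form of [Q] becomes
    [B(w, u) = sum phi_i(w) (<v_(i+1), u_(i+1)> - <v_i, u_i>)].
    Tangent vectors with prescribed radial components [rho_i = <v_i, u_i>] exist exactly when
    [sum (rho_i + rho_(i+1)) / m_i = 0]. If [sum 2 / m_i <> 0], [rho] can be any indicator
    corrected by a constant, so a kernel vector has all [phi_i] equal: it is an infinitesimal
    rigid motion. If [sum 2 / m_i = 0], the tangent vector with all [rho_i = 1] is in the kernel
    and is not rigid, as [P] is not on a line. Finally [eps_i tan alpha_i = -1 / m_i].
    Since the Hessian is defined through curves, every tangent vector is realized by a curve: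
    turn the edges of a chain and close it up by intersecting two circles at a vertex where the
    polygon is not straight. *)

Lemma next_succ n i : (S i < n)%nat -> next n i = S i.
Proof. intros H. unfold next. apply Nat.mod_small. exact H. Qed.

Lemma next_wrap n i : S i = n -> next n i = 0%nat.
Proof. intros H. unfold next. rewrite H. apply Nat.Div0.mod_same. Qed.

Lemma next_lt n i : (i < n)%nat -> (next n i < n)%nat.
Proof.
  intros H. destruct (Nat.eq_dec (S i) n) as [E|E].
  - rewrite (next_wrap n i E). lia.
  - rewrite (next_succ n i) by lia. lia.
Qed.

Lemma next_inj n i j : (i < n)%nat -> (j < n)%nat -> next n i = next n j -> i = j.
Proof.
  intros Hi Hj.
  destruct (Nat.eq_dec (S i) n) as [E|E], (Nat.eq_dec (S j) n) as [E'|E'];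
    repeat first [rewrite (next_wrap n i E) | rewrite (next_wrap n j E')
                 | rewrite (next_succ n i) by lia | rewrite (next_succ n j) by lia]; lia.
Qed.

Lemma rsum_ext n f g : (forall i, (i < n)%nat -> f i = g i) -> rsum n f = rsum n g.
Proof.
  induction n; simpl; intros H; [reflexivity|].
  rewrite IHn by (intros; apply H; lia). rewrite H by lia. reflexivity.
Qed.

Lemma rsum_add n f g : rsum n (fun i => f i + g i) = rsum n f + rsum n g.
Proof. induction n; simpl; [lra|]. rewrite IHn. lra. Qed.

Lemma rsum_sub n f g : rsum n (fun i => f i - g i) = rsum n f - rsum n g.
Proof. induction n; simpl; [lra|]. rewrite IHn. lra. Qed.

Lemma rsum_scal n c f : rsum n (fun i => c * f i) = c * rsum n f.
Proof. induction n; simpl; [lra|]. rewrite IHn. lra. Qed.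

Lemma rsum_opp n f : rsum n (fun i => - f i) = - rsum n f.
Proof. induction n; simpl; [lra|]. rewrite IHn. lra. Qed.

Lemma rsum_zero n : rsum n (fun _ => 0) = 0.
Proof. induction n; simpl; [lra|]. rewrite IHn. lra. Qed.

Lemma rsum_succ_l k f : rsum (S k) f = f 0%nat + rsum k (fun i => f (S i)).
Proof. induction k; simpl in *; [lra|]. rewrite IHk. lra. Qed.

Lemma rsum_next n f : (0 < n)%nat -> rsum n (fun i => f (next n i)) = rsum n f.
Proof.
  intros Hn. destruct n as [|k]; [lia|].
  cbn [rsum].
  rewrite (rsum_ext k (fun i => f (next (S k) i)) (fun i => f (S i))).
  2:{ intros i Hi. rewrite next_succ by lia. reflexivity. }
  rewrite (next_wrap (S k) k) by reflexivity.
  change (rsum k f + f k) with (rsum (S k) f). rewrite rsum_succ_l. lra.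
Qed.

Lemma rsum_telescope n F : (0 < n)%nat -> rsum n (fun i => F (next n i) - F i) = 0.
Proof. intros Hn. rewrite rsum_sub, rsum_next by exact Hn. lra. Qed.

Lemma rsum_indicator n j f : (j < n)%nat ->
  rsum n (fun i => if Nat.eqb i j then f i else 0) = f j.
Proof.
  induction n; intros Hj; [lia|]. simpl.
  destruct (Nat.eq_dec j n) as [->|E].
  - rewrite Nat.eqb_refl, (rsum_ext n _ (fun _ => 0)), rsum_zero; [lra|].
    intros i Hi. destruct (Nat.eqb_spec i n); [lia|reflexivity].
  - rewrite IHn by lia. destruct (Nat.eqb_spec n j); [lia|]. lra.
Qed.

Section DerivableLim.
Variables (f g : R -> R) (x a b : R).

Lemma dlim_const c : derivable_pt_lim (fun _ => c) x 0.
Proof. apply derivable_pt_lim_const. Qed.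

Lemma dlim_id : derivable_pt_lim (fun t => t) x 1.
Proof. apply derivable_pt_lim_id. Qed.

Hypotheses (Hf : derivable_pt_lim f x a) (Hg : derivable_pt_lim g x b).

Lemma dlim_add : derivable_pt_lim (fun t => f t + g t) x (a + b).
Proof. apply (derivable_pt_lim_plus f g); auto. Qed.

Lemma dlim_sub : derivable_pt_lim (fun t => f t - g t) x (a - b).
Proof. apply (derivable_pt_lim_minus f g); auto. Qed.

Lemma dlim_mul : derivable_pt_lim (fun t => f t * g t) x (a * g x + f x * b).
Proof. apply (derivable_pt_lim_mult f g); auto. Qed.

End DerivableLim.

Lemma dlim_comp h f x a b : derivable_pt_lim f x a -> derivable_pt_lim h (f x) b ->
  derivable_pt_lim (fun t => h (f t)) x (b * a).
Proof. intros. apply (derivable_pt_lim_comp f h); auto. Qed.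

Lemma dlim_ext f g x l : (forall z, f z = g z) ->
  derivable_pt_lim f x l -> derivable_pt_lim g x l.
Proof. intros. apply (derivable_pt_lim_ext f g); auto. Qed.

Lemma dlim_eq f x l l' : l = l' -> derivable_pt_lim f x l -> derivable_pt_lim f x l'.
Proof. intros ->; auto. Qed.

Lemma dlim_rsum n (F : nat -> R -> R) (F' : nat -> R) x :
  (forall i, (i < n)%nat -> derivable_pt_lim (F i) x (F' i)) ->
  derivable_pt_lim (fun t => rsum n (fun i => F i t)) x (rsum n F').
Proof.
  induction n; intros H; simpl.
  - apply dlim_const.
  - apply dlim_add; [apply IHn; intros; apply H|apply H]; lia.
Qed.

Lemma dlim_inv x : x <> 0 -> derivable_pt_lim (fun y => / y) x (- / (x * x)).
Proof.
  intros Hx.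
  eapply dlim_eq; [|apply (dlim_ext (fun y => 1 / y)); [intro; unfold Rdiv; ring|]].
  2:{ apply (derivable_pt_lim_div (fun _ => 1) (fun y => y));
      [apply dlim_const|apply dlim_id|exact Hx]. }
  unfold Rsqr. field. exact Hx.
Qed.

Lemma dlim_constant_zero (f : R -> R) c t l :
  (forall s, f s = c) -> derivable_pt_lim f t l -> l = 0.
Proof.
  intros E D. eapply uniqueness_limite; [exact D|].
  eapply dlim_ext; [intro s; symmetry; apply E|]. apply dlim_const.
Qed.

Definition C2_on (D : R -> Prop) (f f1 f2 : R -> R) : Prop :=
  forall x, D x -> derivable_pt_lim f x (f1 x) /\ derivable_pt_lim f1 x (f2 x).

Definition C2 (f : R -> R) : Prop := exists f1 f2, C2_on (fun _ => True) f f1 f2.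

Lemma C2_const c : C2 (fun _ => c).
Proof. exists (fun _ => 0), (fun _ => 0). intros t _; split; apply dlim_const. Qed.

Lemma C2_id : C2 (fun t => t).
Proof. exists (fun _ => 1), (fun _ => 0). intros t _; split; [apply dlim_id|apply dlim_const]. Qed.

Lemma C2_add f g : C2 f -> C2 g -> C2 (fun t => f t + g t).
Proof.
  intros [f1 [f2 Hf]] [g1 [g2 Hg]].
  exists (fun t => f1 t + g1 t), (fun t => f2 t + g2 t). intros t _.
  destruct (Hf t I), (Hg t I); split; apply dlim_add; auto.
Qed.

Lemma C2_sub f g : C2 f -> C2 g -> C2 (fun t => f t - g t).
Proof.
  intros [f1 [f2 Hf]] [g1 [g2 Hg]].
  exists (fun t => f1 t - g1 t), (fun t => f2 t - g2 t). intros t _.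
  destruct (Hf t I), (Hg t I); split; apply dlim_sub; auto.
Qed.

Lemma C2_mul f g : C2 f -> C2 g -> C2 (fun t => f t * g t).
Proof.
  intros [f1 [f2 Hf]] [g1 [g2 Hg]].
  exists (fun t => f1 t * g t + f t * g1 t),
         (fun t => f2 t * g t + f1 t * g1 t + (f1 t * g1 t + f t * g2 t)).
  intros t _. destruct (Hf t I), (Hg t I).
  split; [apply dlim_mul|apply dlim_add; apply dlim_mul]; auto.
Qed.

Lemma C2_comp_on (D : R -> Prop) h h1 h2 f :
  C2_on D h h1 h2 -> (forall t, D (f t)) -> C2 f -> C2 (fun t => h (f t)).
Proof.
  intros Hh HD [f1 [f2 Hf]].
  exists (fun t => h1 (f t) * f1 t), (fun t => h2 (f t) * f1 t * f1 t + h1 (f t) * f2 t).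
  intros t _. destruct (Hf t I) as [A B], (Hh (f t) (HD t)) as [C E].
  split; [apply dlim_comp; auto|].
  eapply dlim_eq; [|apply dlim_mul; [apply dlim_comp; [exact A|exact E]|exact B]].
  cbv beta; ring.
Qed.

Lemma C2_comp h f : C2 h -> C2 f -> C2 (fun t => h (f t)).
Proof. intros [h1 [h2 Hh]]. apply (C2_comp_on (fun _ => True) h h1 h2); auto. Qed.

Lemma C2_sin f : C2 f -> C2 (fun t => sin (f t)).
Proof.
  apply (C2_comp_on (fun _ => True) sin cos (fun t => - sin t)); auto.
  intros x _; split; [apply derivable_pt_lim_sin|apply derivable_pt_lim_cos].
Qed.

Lemma C2_cos f : C2 f -> C2 (fun t => cos (f t)).
Proof.
  apply (C2_comp_on (fun _ => True) cos (fun t => - sin t) (fun t => - cos t)); auto.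
  intros x _; split; [apply derivable_pt_lim_cos|].
  apply (derivable_pt_lim_opp sin), derivable_pt_lim_sin.
Qed.

Lemma C2_inv f : (forall t, f t <> 0) -> C2 f -> C2 (fun t => / f t).
Proof.
  apply (C2_comp_on (fun x => x <> 0) Rinv (fun y => - / (y * y)) (fun y => 2 / (y * y * y))).
  intros x Hx; split; [apply dlim_inv; auto|].
  eapply dlim_eq; [|apply (dlim_comp (fun y => - / y) (fun y => y * y))].
  3:{ apply (derivable_pt_lim_opp Rinv), dlim_inv. intro H. apply Hx. nra. }
  2:{ apply dlim_mul; apply dlim_id. }
  cbv beta. field. exact Hx.
Qed.

Lemma C2_sqrt f : (forall t, 0 < f t) -> C2 f -> C2 (fun t => sqrt (f t)).
Proof.
  apply (C2_comp_on (fun x => 0 < x) sqrt (fun y => / (2 * sqrt y))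
           (fun y => - / (4 * y * sqrt y))).
  intros x Hx; split; [apply derivable_pt_lim_sqrt; auto|].
  pose proof (sqrt_lt_R0 x Hx) as Hs. pose proof (sqrt_sqrt x (Rlt_le _ _ Hx)) as Hss.
  eapply dlim_eq; [|apply (dlim_comp Rinv (fun y => 2 * sqrt y))].
  3:{ apply dlim_inv. lra. }
  2:{ eapply dlim_eq; [|apply dlim_mul; [apply dlim_const|apply derivable_pt_lim_sqrt; exact Hx]].
      reflexivity. }
  replace (4 * x * sqrt x) with (4 * (sqrt x * sqrt x) * sqrt x) by (rewrite Hss; ring).
  field. lra.
Qed.

Lemma C2_rsum n (F : nat -> R -> R) : (forall i, (i < n)%nat -> C2 (F i)) ->
  C2 (fun t => rsum n (fun i => F i t)).
Proof.
  induction n; intros H; simpl.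
  - apply C2_const.
  - apply C2_add; [apply IHn; intros; apply H|apply H]; lia.
Qed.

Lemma C2_derivable f : C2 f -> forall x, exists l, derivable_pt_lim f x l.
Proof. intros [f1 [f2 H]] x. exists (f1 x). apply H; exact I. Qed.

(** * Curves in the polygon space *)

Definition has_vel (n : nat) (g : R -> config) (t : R) (w : config) : Prop :=
  forall i, (i < n)%nat ->
    derivable_pt_lim (fun s => fst (g s i)) t (fst (w i)) /\
    derivable_pt_lim (fun s => snd (g s i)) t (snd (w i)).

Lemma curve_vel_has_vel n g g1 : curve_vel n g g1 ->
  (forall t, has_vel n g t (g1 t)) /\ exists g2, forall t, has_vel n g1 t (g2 t).
Proof.
  intros [g2 H]. split.
  - intros t i Hi. destruct (H i Hi t) as [? [? _]]. auto.
  - exists g2. intros t i Hi. destruct (H i Hi t) as [_ [_ ?]]. auto.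
Qed.

Definition area_diff (n : nat) (v w : config) : R :=
  / 2 * rsum n (fun i => fst (w i) * snd (v (next n i)) + fst (v i) * snd (w (next n i))
                        - (fst (w (next n i)) * snd (v i) + fst (v (next n i)) * snd (w i))).

Lemma area_has_derivative n g t w : has_vel n g t w ->
  derivable_pt_lim (fun s => area n (g s)) t (area_diff n (g t) w).
Proof.
  intros H. unfold area, area_diff.
  eapply dlim_eq; [|apply dlim_mul; [apply dlim_const|]].
  2:{ apply (dlim_rsum n (fun i s => fst (g s i) * snd (g s (next n i))
                                   - fst (g s (next n i)) * snd (g s i))).
      intros i Hi. destruct (H i Hi) as [A B], (H (next n i) (next_lt n i Hi)) as [C D].
      apply dlim_sub; apply dlim_mul; eauto. }
  cbv beta. ring.
Qed.

Lemma area_diff_has_derivative n g h t w z : has_vel n g t w -> has_vel n h t z ->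
  derivable_pt_lim (fun s => area_diff n (g s) (h s)) t
    (area_diff n (g t) z + area_diff n w (h t)).
Proof.
  intros H1 H2. unfold area_diff.
  eapply dlim_eq; [|apply dlim_mul; [apply dlim_const|]].
  2:{ apply (dlim_rsum n (fun i s => fst (h s i) * snd (g s (next n i))
                 + fst (g s i) * snd (h s (next n i))
                 - (fst (h s (next n i)) * snd (g s i) + fst (g s (next n i)) * snd (h s i)))).
      intros i Hi. pose proof (next_lt n i Hi) as Hi'.
      destruct (H1 i Hi), (H1 _ Hi'), (H2 i Hi), (H2 _ Hi').
      apply dlim_sub; apply dlim_add; apply dlim_mul; eauto. }
  cbv beta. rewrite <- Rmult_plus_distr_l, <- rsum_add, Rmult_0_l, Rplus_0_l.
  f_equal. apply rsum_ext. intros i Hi. ring.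
Qed.

Lemma area_diff_agree n v v' w w' : agree n v v' -> agree n w w' ->
  area_diff n v w = area_diff n v' w'.
Proof.
  intros A B. unfold area_diff. f_equal. apply rsum_ext. intros i Hi.
  rewrite (A i Hi), (B i Hi), (A _ (next_lt n i Hi)), (B _ (next_lt n i Hi)). reflexivity.
Qed.

Definition dist2 (p q : R * R) : R :=
  (fst p - fst q) * (fst p - fst q) + (snd p - snd q) * (snd p - snd q).

(** Half the derivative of [dist2 p q] when [p], [q] move with velocities [p1], [q1]. *)
Definition dist2_var (p q p1 q1 : R * R) : R :=
  (fst p - fst q) * (fst p1 - fst q1) + (snd p - snd q) * (snd p1 - snd q1).

Lemma dist_dist2 p q : Defs.dist p q = sqrt (dist2 p q).
Proof. unfold Defs.dist, dist2. f_equal. ring. Qed.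

Lemma in_L_dist2 n l v i : in_L n l v -> (i < n)%nat -> dist2 (v i) (v (next n i)) = l i * l i.
Proof.
  intros H Hi. specialize (H i Hi). rewrite dist_dist2 in H. rewrite <- H.
  symmetry. apply sqrt_sqrt. apply Rplus_le_le_0_compat; apply Rle_0_sqr.
Qed.

Lemma in_L_nonneg n l v i : in_L n l v -> (i < n)%nat -> 0 <= l i.
Proof. intros H Hi. rewrite <- (H i Hi). apply sqrt_pos. Qed.

Lemma dist2_has_derivative n g g1 t i j : has_vel n g t (g1 t) ->
  (i < n)%nat -> (j < n)%nat ->
  derivable_pt_lim (fun s => dist2 (g s i) (g s j)) t
    (2 * dist2_var (g t i) (g t j) (g1 t i) (g1 t j)).
Proof.
  intros H Hi Hj. destruct (H i Hi), (H j Hj). unfold dist2, dist2_var.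
  eapply dlim_eq; [|apply dlim_add; apply dlim_mul; apply dlim_sub; eauto]. cbv beta. ring.
Qed.

Lemma has_d2_at0_unique f c c' : has_d2_at0 f c -> has_d2_at0 f c' -> c = c'.
Proof.
  intros [f' [Hf Hc]] [f'' [Hf' Hc']].
  assert (E : forall t, f' t = f'' t) by (intro t; eapply uniqueness_limite; eauto).
  eapply uniqueness_limite; [|exact Hc']. eapply dlim_ext; [exact E|exact Hc].
Qed.

Section CurveInL.
Variables (n : nat) (l : nat -> R) (g g1 g2 : R -> config).
Hypotheses (Hg : forall t, has_vel n g t (g1 t)) (Hg1 : forall t, has_vel n g1 t (g2 t))
  (HL : forall t, in_L n l (g t)).

Lemma curve_edges_orthogonal t i : (i < n)%nat ->
  dist2_var (g t i) (g t (next n i)) (g1 t i) (g1 t (next n i)) = 0.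
Proof.
  intros Hi.
  enough (2 * dist2_var (g t i) (g t (next n i)) (g1 t i) (g1 t (next n i)) = 0) by lra.
  apply (dlim_constant_zero (fun s => dist2 (g s i) (g s (next n i))) (l i * l i) t).
  - intro s. apply in_L_dist2; auto.
  - apply (dist2_has_derivative n); auto using next_lt.
Qed.

Lemma curve_edges_second_order t i : (i < n)%nat ->
  dist2 (g1 t i) (g1 t (next n i)) +
  dist2_var (g t i) (g t (next n i)) (g2 t i) (g2 t (next n i)) = 0.
Proof.
  intros Hi. pose proof (next_lt n i Hi) as Hi'.
  apply (dlim_constant_zero (fun s => dist2_var (g s i) (g s (next n i)) (g1 s i) (g1 s (next n i))) 0 t).
  - intro s. apply curve_edges_orthogonal; auto.
  - destruct (Hg t i Hi), (Hg t _ Hi'), (Hg1 t i Hi), (Hg1 t _ Hi').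
    unfold dist2_var, dist2.
    eapply dlim_eq; [|apply dlim_add; apply dlim_mul; apply dlim_sub; eauto]. cbv beta. ring.
Qed.

End CurveInL.

(** * Cyclic polygons: first and second variation of the area *)

Lemma orthogonal_rot90 (ax ay dx dy : R) : ax * dx + ay * dy = 0 -> ax * ax + ay * ay <> 0 ->
  dx = - ((ax * dy - ay * dx) / (ax * ax + ay * ay)) * ay /\
  dy = ((ax * dy - ay * dx) / (ax * ax + ay * ay)) * ax.
Proof.
  intros H E. split; apply (Rmult_eq_reg_r (ax * ax + ay * ay)); auto; field_simplify; auto.
  - replace (dx * ax ^ 2 + dx * ay ^ 2) with (ax * (ax * dx + ay * dy) - (ax * dy - ay * dx) * ay)
      by ring. rewrite H. ring.
  - replace (dy * ax ^ 2 + dy * ay ^ 2) with (ay * (ax * dx + ay * dy) + (ax * dy - ay * dx) * ax)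
      by ring. rewrite H. ring.
Qed.

Section CyclicPolygon.
Variables (n : nat) (P : config) (O : R * R) (r : R).

Definition pcx i := fst (P i) - fst O.
Definition pcy i := snd (P i) - snd O.
Definition edx i := fst (P (next n i)) - fst (P i).
Definition edy i := snd (P (next n i)) - snd (P i).
Definition edge2 i := edx i * edx i + edy i * edy i.

(** The sum of the endpoints of a chord (from the centre) is orthogonal to the chord, so it is
    [midpoint_coef i] times the chord turned by a right angle. *)
Definition midpoint_coef i :=
  (edx i * (pcy i + pcy (next n i)) - edy i * (pcx i + pcx (next n i))) / edge2 i.

Definition edge_stretch (w : config) i :=
  edx i * (fst (w (next n i)) - fst (w i)) + edy i * (snd (w (next n i)) - snd (w i)).

Definition lin_tangent (w : config) := forall i, (i < n)%nat -> edge_stretch w i = 0.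

Definition hess_form (w : config) :=
  / 2 * rsum n (fun i => midpoint_coef i * dist2 (w i) (w (next n i))) + area_diff n w w.

Hypothesis Hcirc : forall i, (i < n)%nat -> pcx i * pcx i + pcy i * pcy i = r * r.
Hypothesis Hedge : forall i, (i < n)%nat -> edge2 i <> 0.
Hypothesis Hn : (0 < n)%nat.

Lemma edx_pc i : edx i = pcx (next n i) - pcx i.
Proof. unfold edx, pcx. ring. Qed.

Lemma edy_pc i : edy i = pcy (next n i) - pcy i.
Proof. unfold edy, pcy. ring. Qed.

Lemma midpoint_coef_spec i : (i < n)%nat ->
  pcx i + pcx (next n i) = - midpoint_coef i * edy i /\
  pcy i + pcy (next n i) = midpoint_coef i * edx i.
Proof.
  intros Hi. apply orthogonal_rot90; [|apply Hedge; auto].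
  rewrite edx_pc, edy_pc. pose proof (Hcirc i Hi). pose proof (Hcirc _ (next_lt n i Hi)). nra.
Qed.

Lemma area_diff_at_P z : area_diff n P z =
  - / 2 * rsum n (fun i => midpoint_coef i * edge_stretch z i).
Proof.
  set (K := fun j => fst (z j) * pcy j - snd (z j) * pcx j - (fst (z j) * snd O - snd (z j) * fst O)).
  unfold area_diff.
  rewrite (rsum_ext n _ (fun i => - (midpoint_coef i * edge_stretch z i) + (K (next n i) - K i))).
  { rewrite rsum_add, rsum_telescope, rsum_opp by auto. ring. }
  intros i Hi. destruct (midpoint_coef_spec i Hi) as [A B].
  set (m := midpoint_coef i) in *. set (j := next n i) in *.
  transitivity (- (m * edge_stretch z i) + (K j - K i)
    + (pcx i + pcx j + m * edy i) * (snd (z j) - snd (z i))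
    - (pcy i + pcy j - m * edx i) * (fst (z j) - fst (z i))).
  - unfold K, edge_stretch, edx, edy, pcx, pcy. fold j. ring.
  - rewrite A, B. ring.
Qed.

Lemma adm_area_expansion l g w : adm n l P g w ->
  lin_tangent w /\ derivable_pt_lim (fun t => area n (g t)) 0 0 /\
  has_d2_at0 (fun t => area n (g t)) (hess_form w).
Proof.
  intros [g1 [Hc [HL [A0 A1]]]].
  destruct (curve_vel_has_vel n g g1 Hc) as [H1 [g2 H2]].
  assert (Hw : lin_tangent w).
  { intros i Hi. pose proof (curve_edges_orthogonal n l g g1 H1 HL 0 i Hi) as E.
    rewrite (A0 i Hi), (A0 _ (next_lt n i Hi)), (A1 i Hi), (A1 _ (next_lt n i Hi)) in E.
    unfold dist2_var in E. unfold edge_stretch, edx, edy. lra. }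
  assert (Hs : forall i, (i < n)%nat ->
             edge_stretch (g2 0) i = - dist2 (w i) (w (next n i))).
  { intros i Hi. pose proof (curve_edges_second_order n l g g1 g2 H1 H2 HL 0 i Hi) as E.
    rewrite (A0 i Hi), (A0 _ (next_lt n i Hi)), (A1 i Hi), (A1 _ (next_lt n i Hi)) in E.
    unfold dist2_var in E. unfold edge_stretch, edx, edy. lra. }
  split; [exact Hw|]. split.
  - eapply dlim_eq; [|apply area_has_derivative, H1].
    rewrite (area_diff_agree n (g 0) P (g1 0) w), area_diff_at_P by auto.
    rewrite (rsum_ext n _ (fun _ => 0)), rsum_zero; [ring|].
    intros i Hi. rewrite (Hw i Hi). ring.
  - exists (fun t => area_diff n (g t) (g1 t)). split; [intro t; apply area_has_derivative, H1|].
    eapply dlim_eq; [|apply area_diff_has_derivative; [apply H1|apply H2]].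
    rewrite (area_diff_agree n (g 0) P (g2 0) (g2 0)), (area_diff_agree n (g1 0) w (g1 0) w),
      area_diff_at_P by (auto; intros i Hi; reflexivity).
    unfold hess_form. f_equal.
    rewrite (rsum_ext n _ (fun i => - (midpoint_coef i * dist2 (w i) (w (next n i))))),
      rsum_opp; [ring|].
    intros i Hi. rewrite Hs by auto. ring.
Qed.

Definition rot_rate (w : config) i :=
  (edx i * (snd (w (next n i)) - snd (w i)) - edy i * (fst (w (next n i)) - fst (w i))) / edge2 i.

Lemma lin_tangent_rot w i : lin_tangent w -> (i < n)%nat ->
  fst (w (next n i)) - fst (w i) = - rot_rate w i * edy i /\
  snd (w (next n i)) - snd (w i) = rot_rate w i * edx i.
Proof. intros H Hi. apply orthogonal_rot90; [apply H|apply Hedge]; auto. Qed.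

Lemma lin_tangent_vadd w u : lin_tangent w -> lin_tangent u -> lin_tangent (vadd w u).
Proof.
  intros Hw Hu i Hi. pose proof (Hw i Hi). pose proof (Hu i Hi).
  unfold edge_stretch, vadd in *. simpl. lra.
Qed.

Definition radial (u : config) j := pcx j * fst (u j) + pcy j * snd (u j).

Definition hess_cross (w u : config) i :=
  midpoint_coef i * ((fst (w i) - fst (w (next n i))) * (fst (u i) - fst (u (next n i))) +
                     (snd (w i) - snd (w (next n i))) * (snd (u i) - snd (u (next n i)))) +
  (fst (u i) * snd (w (next n i)) + fst (w i) * snd (u (next n i))
     - (fst (u (next n i)) * snd (w i) + fst (w (next n i)) * snd (u i))).

Lemma hess_form_vadd w u : hess_form (vadd w u) = hess_form w + hess_form u + rsum n (hess_cross w u).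
Proof.
  unfold hess_form, area_diff.
  rewrite <- !rsum_scal, <- !rsum_add. apply rsum_ext. intros i Hi.
  unfold hess_cross, vadd, dist2. simpl. field.
Qed.

Lemma hess_cross_sum w u : lin_tangent w ->
  rsum n (hess_cross w u) = 2 * rsum n (fun i => rot_rate w i * (radial u (next n i) - radial u i)).
Proof.
  intros H.
  set (F := fun j => - snd (w j) * fst (u j) + fst (w j) * snd (u j)).
  rewrite (rsum_ext n (hess_cross w u)
    (fun i => 2 * (rot_rate w i * (radial u (next n i) - radial u i)) + (F (next n i) - F i))).
  { rewrite rsum_add, rsum_telescope, rsum_scal by auto. ring. }
  intros i Hi. destruct (lin_tangent_rot w i H Hi) as [A B], (midpoint_coef_spec i Hi) as [C D].
  set (j := next n i) in *. set (f := rot_rate w i) in *. set (m := midpoint_coef i) in *.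
  assert (E : hess_cross w u i - (2 * (f * (radial u j - radial u i)) + (F j - F i))
    = f * ((pcx i + pcx j + m * edy i) * (fst (u i) - fst (u j))
           + (pcy i + pcy j - m * edx i) * (snd (u i) - snd (u j)))).
  { unfold hess_cross, radial, F. fold j m.
    replace (fst (w j)) with (fst (w i) - f * edy i) by lra.
    replace (snd (w j)) with (snd (w i) + f * edx i) by lra.
    unfold edx, edy, pcx, pcy. fold j. ring. }
  rewrite C, D in E. lra.
Qed.

Hypothesis Hm : forall i, (i < n)%nat -> midpoint_coef i <> 0.

Definition chord_sum (rho : nat -> R) := rsum n (fun i => (rho i + rho (next n i)) / midpoint_coef i).
Definition chord_partial (rho : nat -> R) k :=
  rsum k (fun i => (rho i + rho (next n i)) / midpoint_coef i).

(** The displacement with radial part [rho] whose tangential part makes every edge length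
    stationary; it closes up exactly when [chord_sum rho = 0]. *)
Definition radial_field (rho : nat -> R) : config :=
  fun k => (rho k * pcx k - chord_partial rho k * pcy k, rho k * pcy k + chord_partial rho k * pcx k).

Lemma chord_partial_step rho i : chord_sum rho = 0 -> (i < n)%nat ->
  chord_partial rho (next n i) = chord_partial rho i + (rho i + rho (next n i)) / midpoint_coef i.
Proof.
  intros H Hi. destruct (Nat.eq_dec (S i) n) as [E|E].
  - assert (HS : chord_sum rho = chord_partial rho (S i))
      by (unfold chord_sum, chord_partial; rewrite E; reflexivity).
    rewrite H in HS. unfold chord_partial in *. simpl in HS.
    rewrite (next_wrap n i E) in *. simpl. lra.
  - unfold chord_partial. rewrite (next_succ n i) by lia. simpl. rewrite (next_succ n i) by lia.
    reflexivity.
Qed.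

Lemma radial_field_step_alg (a b c d rho rho' t t' m : R) :
  a * a + b * b = c * c + d * d -> a + c = - m * (d - b) -> b + d = m * (c - a) ->
  t' = t + (rho + rho') / m -> m <> 0 ->
  (c - a) * ((rho' * c - t' * d) - (rho * a - t * b)) +
  (d - b) * ((rho' * d + t' * c) - (rho * b + t * a)) = 0.
Proof.
  intros N C D T M.
  assert (Z : (c - a) * ((rho' * c - t' * d) - (rho * a - t * b)) +
              (d - b) * ((rho' * d + t' * c) - (rho * b + t * a))
            = ((rho + rho') / 2 - (t' - t) * m / 2) * ((c - a) * (c - a) + (d - b) * (d - b))
              + (t' - t) / 2 * ((a + c + m * (d - b)) * (d - b) - (b + d - m * (c - a)) * (c - a))
              + (rho' - rho) / 2 * ((c * c + d * d) - (a * a + b * b)))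
    by field.
  rewrite Z, T. replace (a + c + m * (d - b)) with 0 by lra.
  replace (b + d - m * (c - a)) with 0 by lra. rewrite N. field. exact M.
Qed.

Lemma radial_field_tangent rho : chord_sum rho = 0 -> lin_tangent (radial_field rho).
Proof.
  intros H i Hi. destruct (midpoint_coef_spec i Hi) as [C D].
  unfold edge_stretch, radial_field. simpl. rewrite edx_pc, edy_pc in *.
  apply radial_field_step_alg with (midpoint_coef i); auto.
  - rewrite (Hcirc i Hi), (Hcirc _ (next_lt n i Hi)). reflexivity.
  - apply chord_partial_step; auto.
Qed.

Lemma radial_radial_field rho j : (j < n)%nat -> radial (radial_field rho) j = r * r * rho j.
Proof. intros Hj. unfold radial, radial_field. simpl. rewrite <- (Hcirc j Hj). ring. Qed.

Lemma chord_sum_sub_const (rho : nat -> R) lam :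
  chord_sum (fun k => rho k - lam) = chord_sum rho - lam * chord_sum (fun _ => 1).
Proof.
  unfold chord_sum. rewrite <- rsum_scal, <- rsum_sub. apply rsum_ext. intros i Hi.
  field. apply Hm; auto.
Qed.

Hypothesis Hr : 0 < r.

(** Testing against [radial_field rho] with [rho] the indicator of the vertex [next n j],
    corrected by a constant so that [chord_sum rho = 0]. *)
Lemma rot_rate_periodic w :
  (forall u, lin_tangent u -> rsum n (fun i => rot_rate w i * (radial u (next n i) - radial u i)) = 0) ->
  chord_sum (fun _ => 1) <> 0 -> forall j, (j < n)%nat -> rot_rate w j = rot_rate w (next n j).
Proof.
  intros HK H1 j Hj. pose proof (next_lt n j Hj) as Hj'.
  set (delta := fun k => if Nat.eqb k (next n j) then 1 else 0).
  set (rho := fun k => delta k - chord_sum delta / chord_sum (fun _ => 1)).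
  assert (HP : chord_sum rho = 0) by (unfold rho; rewrite chord_sum_sub_const; field; auto).
  specialize (HK _ (radial_field_tangent rho HP)).
  rewrite (rsum_ext n _ (fun i => r * r * (rot_rate w i * delta (next n i) - rot_rate w i * delta i)))
    in HK.
  2:{ intros i Hi. rewrite !radial_radial_field by auto using next_lt. unfold rho. ring. }
  rewrite rsum_scal, rsum_sub in HK.
  rewrite (rsum_ext n (fun i => rot_rate w i * delta (next n i))
                      (fun i => if Nat.eqb i j then rot_rate w i else 0)) in HK.
  2:{ intros i Hi. unfold delta.
      destruct (Nat.eqb_spec (next n i) (next n j)) as [E|E], (Nat.eqb_spec i j) as [E'|E'];
        subst; try ring; [exfalso; apply E'; eapply next_inj; eauto|tauto]. }
  rewrite (rsum_ext n (fun i => rot_rate w i * delta i)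
                      (fun i => if Nat.eqb i (next n j) then rot_rate w i else 0)) in HK.
  2:{ intros i Hi. unfold delta. destruct (Nat.eqb_spec i (next n j)); ring. }
  rewrite !rsum_indicator in HK by auto.
  assert (Hr2 : r * r <> 0) by nra.
  apply Rmult_integral in HK as [HK|HK]; [contradiction|lra].
Qed.

Definition bif_field := radial_field (fun _ => 1).

Lemma rot_rate_bif_field i : chord_sum (fun _ => 1) = 0 -> (i < n)%nat ->
  rot_rate bif_field i = chord_partial (fun _ => 1) i + 1 / midpoint_coef i.
Proof.
  intros H Hi. pose proof (chord_partial_step (fun _ => 1) i H Hi) as T.
  pose proof (Hcirc i Hi) as N1. pose proof (Hcirc _ (next_lt n i Hi)) as N2.
  pose proof (Hm i Hi) as M. pose proof (Hedge i Hi) as EL.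
  unfold rot_rate, bif_field, radial_field. simpl. unfold edge2 in *.
  rewrite edx_pc, edy_pc in *.
  set (a := pcx i) in *. set (b := pcy i) in *.
  set (c := pcx (next n i)) in *. set (d := pcy (next n i)) in *.
  set (t := chord_partial (fun _ => 1) i) in *. set (t' := chord_partial (fun _ => 1) (next n i)) in *.
  set (m := midpoint_coef i) in *. set (E := (c - a) * (c - a) + (d - b) * (d - b)) in *.
  apply (Rmult_eq_reg_r E); [|exact EL].
  transitivity ((t + t') * E / 2 + (t' - t) * ((c * c + d * d) - (a * a + b * b)) / 2).
  - unfold E. field. auto.
  - rewrite T, N1, N2. unfold E. field. auto.
Qed.

Lemma radial_sum_alg (a b c d ux uy vx vy m : R) :
  a + c = - m * (d - b) -> b + d = m * (c - a) ->
  (c - a) * (vx - ux) + (d - b) * (vy - uy) = 0 ->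
  (a * ux + b * uy) + (c * vx + d * vy) = m * ((c * vy - d * vx) - (a * uy - b * ux)).
Proof.
  intros C D T.
  assert (K : 2 * ((a * ux + b * uy) + (c * vx + d * vy) - m * ((c * vy - d * vx) - (a * uy - b * ux)))
    = (m * m + 1) * ((c - a) * (vx - ux) + (d - b) * (vy - uy))
      + m * (- (a + c + m * (d - b)) * (vy - uy) + (b + d - m * (c - a)) * (vx - ux))
      + (a + c + m * (d - b)) * (ux + vx) + (b + d - m * (c - a)) * (uy + vy)) by ring.
  rewrite T in K. replace (a + c + m * (d - b)) with 0 in K by lra.
  replace (b + d - m * (c - a)) with 0 in K by lra. lra.
Qed.

(** When [chord_sum (fun _ => 1) = 0], both summands of the polarized Hessian at [bif_field]
    telescope. *)
Lemma bif_field_kernel u : chord_sum (fun _ => 1) = 0 -> lin_tangent u ->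
  rsum n (hess_cross bif_field u) = 0.
Proof.
  intros H Hu. rewrite hess_cross_sum by (apply radial_field_tangent; auto).
  set (t := chord_partial (fun _ => 1)).
  set (G := fun j => pcx j * snd (u j) - pcy j * fst (u j)).
  rewrite (rsum_ext n _ (fun i => (t (next n i) * radial u (next n i) - t i * radial u i)
                                  - (G (next n i) - G i))).
  { rewrite rsum_sub, (rsum_telescope n (fun j => t j * radial u j)), (rsum_telescope n G) by auto.
    ring. }
  intros i Hi. rewrite rot_rate_bif_field by auto.
  pose proof (chord_partial_step (fun _ => 1) i H Hi) as T. fold t in T.
  destruct (midpoint_coef_spec i Hi) as [C D]. pose proof (Hu i Hi) as U.
  unfold edge_stretch in U. rewrite edx_pc, edy_pc in *.
  assert (S : radial u i + radial u (next n i) = midpoint_coef i * (G (next n i) - G i))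
    by (unfold radial, G; apply radial_sum_alg; auto).
  rewrite T. fold t. replace (G (next n i) - G i) with ((radial u i + radial u (next n i)) / midpoint_coef i)
    by (rewrite S; field; auto).
  field. auto.
Qed.

End CyclicPolygon.

(** * Half-angle computations on a circle *)

Lemma tan_half_acos c : -1 < c < 1 -> tan (acos c / 2) = sqrt (1 - c²) / (1 + c).
Proof.
  intros Hc. pose proof (acos_bound_lt c Hc) as [A1 A2].
  set (th := acos c) in *.
  assert (Hco : 0 < cos (th / 2)) by (apply cos_gt_0; lra).
  assert (Hs : sin th = 2 * sin (th / 2) * cos (th / 2)) by (rewrite <- sin_2a; f_equal; field).
  assert (Hcs : cos th = 2 * cos (th / 2) * cos (th / 2) - 1)
    by (rewrite <- cos_2a_cos; f_equal; field).
  assert (Cc : cos th = c) by (apply cos_acos; lra).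
  assert (Sc : sin th = sqrt (1 - c²)) by (apply sin_acos; lra).
  rewrite <- Sc, <- Cc, Hs, Hcs. unfold tan. field. lra.
Qed.

Lemma lagrange_identity_circle (a b c d r : R) : a * a + b * b = r * r -> c * c + d * d = r * r ->
  (a * c + b * d) * (a * c + b * d) + (a * d - b * c) * (a * d - b * c) = (r * r) * (r * r).
Proof.
  intros N1 N2. transitivity ((a * a + b * b) * (c * c + d * d)); [ring|]. rewrite N1, N2. ring.
Qed.

Lemma cross_neq0_on_circle (a b c d r : R) : a * a + b * b = r * r -> c * c + d * d = r * r ->
  (c - a) * (c - a) + (d - b) * (d - b) <> 0 -> (a + c) * (a + c) + (b + d) * (b + d) <> 0 ->
  a * d - b * c <> 0.
Proof.
  intros N1 N2 He Ha HX. pose proof (lagrange_identity_circle a b c d r N1 N2) as L.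
  rewrite HX in L. assert (F : (a * c + b * d - r * r) * (a * c + b * d + r * r) = 0) by nra.
  apply Rmult_integral in F as [F|F]; [apply He|apply Ha]; nra.
Qed.

Lemma eps_tan_half_angle (a b c d r : R) : 0 < r ->
  a * a + b * b = r * r -> c * c + d * d = r * r -> a * d - b * c <> 0 ->
  (if Rlt_dec 0 (a * d - b * c) then 1 else -1) *
  tan (acos ((a * c + b * d) / (sqrt (a ^ 2 + b ^ 2) * sqrt (c ^ 2 + d ^ 2))) / 2)
  = (r * r - (a * c + b * d)) / (a * d - b * c).
Proof.
  intros Hr N1 N2 HX.
  assert (Sr : forall x y, x * x + y * y = r * r -> sqrt (x ^ 2 + y ^ 2) = r)
    by (intros x y N; replace (x ^ 2 + y ^ 2) with (r ^ 2) by nra; apply sqrt_pow2; lra).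
  rewrite (Sr a b N1), (Sr c d N2).
  pose proof (lagrange_identity_circle a b c d r N1 N2) as L.
  set (C := a * c + b * d) in *. set (X := a * d - b * c) in *.
  assert (Hr2 : 0 < r * r) by nra.
  set (cc := C / (r * r)).
  assert (Ccc : C = cc * (r * r)) by (unfold cc; field; lra).
  assert (Hcc : -1 < cc < 1).
  { assert (C * C < (r * r) * (r * r)) by (assert (0 < X * X) by nra; nra).
    split; apply (Rmult_lt_reg_r (r * r)); auto; rewrite <- Ccc; nra. }
  rewrite tan_half_acos by exact Hcc.
  set (S := sqrt (1 - cc²)).
  assert (HS2 : S * S = 1 - cc * cc) by (unfold S; rewrite sqrt_sqrt; unfold Rsqr; nra).
  assert (HS : 0 < S) by (unfold S; apply sqrt_lt_R0; unfold Rsqr; nra).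
  assert (XX : X * X = (r * r * S) * (r * r * S)).
  { replace ((r * r * S) * (r * r * S)) with ((r * r) * (r * r) * (S * S)) by ring.
    rewrite HS2. rewrite Ccc in L. nra. }
  assert (XS : X = (if Rlt_dec 0 X then 1 else -1) * (r * r * S)).
  { destruct (Rlt_dec 0 X); [rewrite Rmult_1_l|];
      [apply Rsqr_inj; unfold Rsqr; nra|].
    enough (- X = r * r * S) by lra. apply Rsqr_inj; unfold Rsqr; nra. }
  rewrite XS at 2. rewrite Ccc.
  destruct (Rlt_dec 0 X); field_simplify_eq; try (repeat split; nra); nra.
Qed.

(** * Realizing tangent vectors by curves *)

Lemma dlim_cont_pos (f : R -> R) x0 l : derivable_pt_lim f x0 l -> 0 < f x0 ->
  exists d, 0 < d /\ forall s, Rabs (s - x0) < d -> 0 < f s.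
Proof.
  intros Hd Hp. assert (C : continuity_pt f x0) by (apply derivable_continuous_pt; exists l; exact Hd).
  destruct (C (f x0 / 2)) as [d [Hd' Hs]]; [lra|].
  exists d. split; auto. intros s Hs'.
  destruct (Req_dec s x0) as [->|Ne]; [auto|].
  assert (K := Hs s). simpl in K. unfold R_dist, D_x, no_cond in K.
  assert (Rabs (f s - f x0) < f x0 / 2) by (apply K; split; auto).
  apply Rabs_def2 in H. lra.
Qed.

(** A reparametrization with velocity [1] at [0] whose values stay in [(-dl, dl)]. *)
Definition squash (dl t : R) := dl / 2 * sin (2 / dl * t).

Lemma C2_squash dl : C2 (squash dl).
Proof. unfold squash. apply C2_mul; [apply C2_const|apply C2_sin, C2_mul; [apply C2_const|apply C2_id]]. Qed.

Lemma squash_0 dl : squash dl 0 = 0.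
Proof. unfold squash. rewrite Rmult_0_r, sin_0. ring. Qed.

Lemma squash_derivative_0 dl : 0 < dl -> derivable_pt_lim (squash dl) 0 1.
Proof.
  intros H. unfold squash.
  eapply dlim_eq; [|apply dlim_mul; [apply dlim_const|apply (dlim_comp sin (fun t => 2 / dl * t))]].
  3:{ apply derivable_pt_lim_sin. }
  2:{ apply dlim_mul; [apply dlim_const|apply dlim_id]. }
  cbv beta. rewrite Rmult_0_r, cos_0. field. lra.
Qed.

Lemma squash_bound dl t : 0 < dl -> Rabs (squash dl t - 0) < dl.
Proof.
  intros H. unfold squash. rewrite Rminus_0_r, Rabs_mult, Rabs_right by lra.
  pose proof (SIN_bound (2 / dl * t)) as [S1 S2].
  assert (Rabs (sin (2 / dl * t)) <= 1) by (apply Rabs_le; lra). nra.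
Qed.

Lemma build_curve_vel n (g : R -> config) :
  (forall i, (i < n)%nat -> C2 (fun t => fst (g t i)) /\ C2 (fun t => snd (g t i))) ->
  exists g1, curve_vel n g g1.
Proof.
  intros H.
  assert (W : forall i, exists W : (R -> R) * (R -> R) * (R -> R) * (R -> R), (i < n)%nat ->
     C2_on (fun _ => True) (fun t => fst (g t i)) (fst (fst (fst W))) (snd (fst (fst W))) /\
     C2_on (fun _ => True) (fun t => snd (g t i)) (snd (fst W)) (snd W)).
  { intros i. destruct (Nat.lt_ge_cases i n) as [Hi|Hi].
    - destruct (H i Hi) as [[a1 [a2 A]] [b1 [b2 B]]]. exists (a1, a2, b1, b2). simpl. auto.
    - exists ((fun _ => 0), (fun _ => 0), (fun _ => 0), (fun _ => 0)). intros; lia. }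
  set (F := fun i => proj1_sig (constructive_indefinite_description _ (W i))).
  assert (FP : forall i, (i < n)%nat ->
     C2_on (fun _ => True) (fun t => fst (g t i)) (fst (fst (fst (F i)))) (snd (fst (fst (F i)))) /\
     C2_on (fun _ => True) (fun t => snd (g t i)) (snd (fst (F i))) (snd (F i))).
  { intros i Hi. unfold F. destruct (constructive_indefinite_description _ (W i)) as [x Hx]. auto. }
  exists (fun t i => (fst (fst (fst (F i))) t, snd (fst (F i)) t)),
         (fun t i => (snd (fst (fst (F i))) t, snd (F i) t)).
  intros i Hi t. simpl. destruct (FP i Hi) as [A B], (A t I), (B t I). auto.
Qed.

Lemma two_circle_point (ax ay bx by0 aa bb h : R) :
  let dX := bx - ax in let dY := by0 - ay in let D := dX * dX + dY * dY in
  let x := (D + aa - bb) * / (2 * D) in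
  0 < D -> h * h = aa * / D - x * x ->
  dist2 (ax, ay) (ax + x * dX - h * dY, ay + x * dY + h * dX) = aa /\
  dist2 (ax + x * dX - h * dY, ay + x * dY + h * dX) (bx, by0) = bb.
Proof.
  intros dX dY D x HD Hh. unfold dist2. simpl.
  replace ((ax - (ax + x * dX - h * dY)) * (ax - (ax + x * dX - h * dY)) +
           (ay - (ay + x * dY + h * dX)) * (ay - (ay + x * dY + h * dX)))
    with ((x * x + h * h) * D) by (unfold D; ring).
  replace ((ax + x * dX - h * dY - bx) * (ax + x * dX - h * dY - bx) +
           (ay + x * dY + h * dX - by0) * (ay + x * dY + h * dX - by0))
    with (((x * x + h * h) - 2 * x + 1) * D) by (unfold D, dX, dY; ring).
  rewrite Hh. split; [|unfold x]; field; lra.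
Qed.

Lemma orthogonal_pair_zero (v1x v1y v2x v2y zx zy : R) :
  v1x * zx + v1y * zy = 0 -> v2x * zx + v2y * zy = 0 -> v1x * v2y - v1y * v2x <> 0 ->
  zx = 0 /\ zy = 0.
Proof.
  intros I1 I2 Cr.
  assert (K1 : (v1x * v2y - v1y * v2x) * zx = v2y * (v1x * zx + v1y * zy) - v1y * (v2x * zx + v2y * zy))
    by ring.
  assert (K2 : (v1x * v2y - v1y * v2x) * zy = v1x * (v2x * zx + v2y * zy) - v2x * (v1x * zx + v1y * zy))
    by ring.
  rewrite I1, I2 in K1, K2.
  split; apply (Rmult_eq_reg_l (v1x * v2y - v1y * v2x)); auto; lra.
Qed.

Definition turn (n : nat) (P : config) k :=
  (fst (P (next n k)) - fst (P k)) * (snd (P (next n (next n k))) - snd (P (next n k))) -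
  (snd (P (next n k)) - snd (P k)) * (fst (P (next n (next n k))) - fst (P (next n k))).

Section TangentCurve.
Variables (n : nat) (P u : config) (l : nat -> R).
Hypothesis Hn3 : (3 <= n)%nat.
Hypothesis HL : in_L n l P.
Hypothesis Hedge : forall i, (i < n)%nat -> edge2 n P i <> 0.
Hypothesis Hu : lin_tangent n P u.

(** Vertices [1], ..., [n - 1] are moved as a chain: translated by [s * u 1] and with the
    edge [j] (for [1 <= j]) turned by the angle [s * rot_rate n P u j]. *)
Definition turn_x j s := if Nat.eqb j 0 then 0 else
  cos (s * rot_rate n P u j) * edx n P j - sin (s * rot_rate n P u j) * edy n P j - edx n P j.
Definition turn_y j s := if Nat.eqb j 0 then 0 else
  sin (s * rot_rate n P u j) * edx n P j + cos (s * rot_rate n P u j) * edy n P j - edy n P j.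
Definition chain_x q s := fst (P q) + s * fst (u 1%nat) + rsum q (fun j => turn_x j s).
Definition chain_y q s := snd (P q) + s * snd (u 1%nat) + rsum q (fun j => turn_y j s).

Lemma C2_chain q : C2 (chain_x q) /\ C2 (chain_y q).
Proof.
  unfold chain_x, chain_y.
  split; (apply C2_add; [apply C2_add; [apply C2_const|apply C2_mul; [apply C2_id|apply C2_const]]|]);
    apply C2_rsum; intros j _; unfold turn_x, turn_y; destruct (Nat.eqb j 0);
    try apply C2_const;
    repeat first [apply C2_sub | apply C2_add | apply C2_mul | apply C2_sin | apply C2_cos
                 | apply C2_const | apply C2_id].
Qed.

Lemma chain_at_0 q : chain_x q 0 = fst (P q) /\ chain_y q 0 = snd (P q).
Proof.
  unfold chain_x, chain_y.
  rewrite (rsum_ext q (fun j => turn_x j 0) (fun _ => 0)),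
          (rsum_ext q (fun j => turn_y j 0) (fun _ => 0)), rsum_zero; [split; ring| |];
    intros j _; unfold turn_x, turn_y; destruct (Nat.eqb j 0); auto;
    rewrite Rmult_0_l, cos_0, sin_0; ring.
Qed.

Lemma turn_derivative_0 j :
  derivable_pt_lim (turn_x j) 0 (if Nat.eqb j 0 then 0 else - rot_rate n P u j * edy n P j) /\
  derivable_pt_lim (turn_y j) 0 (if Nat.eqb j 0 then 0 else rot_rate n P u j * edx n P j).
Proof.
  set (k := rot_rate n P u j).
  assert (Dk : derivable_pt_lim (fun s => s * k) 0 k)
    by (eapply dlim_eq; [|apply dlim_mul; [apply dlim_id|apply dlim_const]]; cbv beta; ring).
  assert (Dc : derivable_pt_lim (fun s => cos (s * k)) 0 0).
  { eapply dlim_eq; [|apply (dlim_comp cos (fun s => s * k)); [exact Dk|apply derivable_pt_lim_cos]].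
    rewrite Rmult_0_l, sin_0. ring. }
  assert (Ds : derivable_pt_lim (fun s => sin (s * k)) 0 k).
  { eapply dlim_eq; [|apply (dlim_comp sin (fun s => s * k)); [exact Dk|apply derivable_pt_lim_sin]].
    rewrite Rmult_0_l, cos_0. ring. }
  unfold turn_x, turn_y. fold k. destruct (Nat.eqb j 0); [split; apply dlim_const|].
  split; eapply dlim_eq.
  2:{ apply dlim_sub; [apply dlim_sub; apply dlim_mul; [exact Dc|apply dlim_const|exact Ds|apply dlim_const]
                      |apply dlim_const]. }
  3:{ apply dlim_sub; [apply dlim_add; apply dlim_mul; [exact Ds|apply dlim_const|exact Dc|apply dlim_const]
                      |apply dlim_const]. }
  all: cbv beta; rewrite Rmult_0_l, ?cos_0, ?sin_0; ring.
Qed.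

Lemma chain_derivative_0 q : (1 <= q)%nat -> (q < n)%nat ->
  derivable_pt_lim (chain_x q) 0 (fst (u q)) /\ derivable_pt_lim (chain_y q) 0 (snd (u q)).
Proof.
  intros H1 H2.
  assert (Sx : fst (u 1%nat) + rsum q (fun j => if Nat.eqb j 0 then 0 else - rot_rate n P u j * edy n P j)
                 = fst (u q) /\
               snd (u 1%nat) + rsum q (fun j => if Nat.eqb j 0 then 0 else rot_rate n P u j * edx n P j)
                 = snd (u q)).
  { induction q as [|q IH]; [lia|].
    destruct (Nat.eq_dec q 0) as [->|Hq]; [simpl; split; ring|].
    destruct IH as [IHx IHy]; try lia. simpl rsum. destruct (Nat.eqb_spec q 0); [lia|].
    destruct (lin_tangent_rot n P Hedge u q Hu ltac:(lia)) as [A B].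
    rewrite (next_succ n q) in A, B by lia. split; lra. }
  destruct Sx as [Sx Sy]. unfold chain_x, chain_y. rewrite <- Sx, <- Sy.
  split; (apply dlim_add; [eapply dlim_eq; [|apply dlim_add; [apply dlim_const|apply dlim_mul;
                            [apply dlim_id|apply dlim_const]]]; cbv beta; ring|]);
    apply (dlim_rsum q); intros; apply turn_derivative_0.
Qed.

Lemma chain_edge q s : (1 <= q)%nat -> (S q < n)%nat ->
  dist2 (chain_x q s, chain_y q s) (chain_x (S q) s, chain_y (S q) s) = l q * l q.
Proof.
  intros H1 H2.
  assert (Ex : edx n P q = fst (P (S q)) - fst (P q)) by (unfold edx; rewrite next_succ by lia; reflexivity).
  assert (Ey : edy n P q = snd (P (S q)) - snd (P q)) by (unfold edy; rewrite next_succ by lia; reflexivity).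
  pose proof (in_L_dist2 n l P q HL ltac:(lia)) as E. rewrite next_succ in E by lia.
  unfold dist2 in *. simpl. unfold chain_x, chain_y. simpl rsum.
  unfold turn_x, turn_y. destruct (Nat.eqb_spec q 0); [lia|].
  rewrite <- E, Ex, Ey.
  set (c := cos (s * rot_rate n P u q)). set (sn := sin (s * rot_rate n P u q)).
  assert (CS : sn * sn + c * c = 1) by (unfold sn, c; rewrite <- !Rsqr_def; apply sin2_cos2).
  set (X := fst (P (S q)) - fst (P q)). set (Y := snd (P (S q)) - snd (P q)).
  replace (fst (P q) + s * fst (u 1%nat) + rsum q (fun j => turn_x j s) -
           (fst (P (S q)) + s * fst (u 1%nat) + (rsum q (fun j => turn_x j s) + (c * X - sn * Y - X))))
    with (- (c * X - sn * Y)) by (unfold X; ring).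
  replace (snd (P q) + s * snd (u 1%nat) + rsum q (fun j => turn_y j s) -
           (snd (P (S q)) + s * snd (u 1%nat) + (rsum q (fun j => turn_y j s) + (sn * X + c * Y - Y))))
    with (- (sn * X + c * Y)) by (unfold Y; ring).
  unfold X, Y. nra.
Qed.

Hypothesis Hturn : turn n P (n - 1) <> 0.

Lemma turn_at_0 :
  (fst (P 0%nat) - fst (P (n - 1)%nat)) * (snd (P 1%nat) - snd (P 0%nat)) -
  (snd (P 0%nat) - snd (P (n - 1)%nat)) * (fst (P 1%nat) - fst (P 0%nat)) <> 0.
Proof.
  unfold turn in Hturn. rewrite (next_wrap n (n - 1)), (next_succ n 0) in Hturn by lia. exact Hturn.
Qed.

(** Vertex [0] closes the chain: it is the apex of the triangle with base from vertex [n - 1]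
    to vertex [1] and sides [l (n - 1)], [l 0], written in the frame of the base as
    [foot s * base + height s * base^perp]. The height is rescaled from its value at [0], which
    selects the apex on the side of [P 0]. *)
Definition base_dx s := chain_x 1 s - chain_x (n - 1) s.
Definition base_dy s := chain_y 1 s - chain_y (n - 1) s.
Definition base2 s := base_dx s * base_dx s + base_dy s * base_dy s.
Definition foot s := (base2 s + l (n - 1)%nat * l (n - 1)%nat - l 0%nat * l 0%nat) * / (2 * base2 s).
Definition height2 s := l (n - 1)%nat * l (n - 1)%nat * / base2 s - foot s * foot s.
Definition height0 :=
  ((snd (P 0%nat) - chain_y (n - 1) 0) * base_dx 0 - (fst (P 0%nat) - chain_x (n - 1) 0) * base_dy 0)
  / base2 0.
Definition height s := height0 * sqrt (height2 s * / height2 0).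
Definition apex_x s := chain_x (n - 1) s + foot s * base_dx s - height s * base_dy s.
Definition apex_y s := chain_y (n - 1) s + foot s * base_dy s + height s * base_dx s.

Lemma closing_at_0 :
  0 < base2 0 /\ height0 <> 0 /\ height2 0 = height0 * height0 /\
  apex_x 0 = fst (P 0%nat) /\ apex_y 0 = snd (P 0%nat).
Proof.
  pose proof turn_at_0 as Ht.
  pose proof (in_L_dist2 n l P (n - 1) HL ltac:(lia)) as La.
  pose proof (in_L_dist2 n l P 0 HL ltac:(lia)) as Lb.
  rewrite (next_wrap n (n - 1)) in La by lia. rewrite (next_succ n 0) in Lb by lia.
  unfold dist2 in La, Lb.
  unfold apex_x, apex_y, height, height0, height2, foot, base2, base_dx, base_dy.
  destruct (chain_at_0 1) as [-> ->], (chain_at_0 (n - 1)) as [-> ->].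
  rewrite <- La, <- Lb.
  set (x0 := fst (P 0%nat)) in *. set (y0 := snd (P 0%nat)) in *.
  set (x1 := fst (P 1%nat)) in *. set (y1 := snd (P 1%nat)) in *.
  set (xa := fst (P (n - 1)%nat)) in *. set (ya := snd (P (n - 1)%nat)) in *.
  set (D := (x1 - xa) * (x1 - xa) + (y1 - ya) * (y1 - ya)).
  assert (HD : D <> 0).
  { intro E. apply Ht. unfold D in E.
    destruct (Rplus_sqr_eq_0 (x1 - xa) (y1 - ya)) as [E1 E2]; [unfold Rsqr; exact E|].
    replace x1 with xa by lra. replace y1 with ya by lra. ring. }
  assert (HD' : 0 < D)
    by (assert (0 <= D) by (unfold D; apply Rplus_le_le_0_compat; apply Rle_0_sqr); lra).
  set (h := ((y0 - ya) * (x1 - xa) - (x0 - xa) * (y1 - ya)) / D).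
  assert (Hh : h <> 0).
  { unfold h. intro E. apply Ht. unfold Rdiv in E.
    apply Rmult_integral in E as [E|E]; [lra|].
    exfalso. apply (Rinv_neq_0_compat D HD). exact E. }
  assert (HY : ((xa - x0) * (xa - x0) + (ya - y0) * (ya - y0)) * / D -
     (D + ((xa - x0) * (xa - x0) + (ya - y0) * (ya - y0)) - ((x0 - x1) * (x0 - x1) + (y0 - y1) * (y0 - y1)))
       * / (2 * D) *
     ((D + ((xa - x0) * (xa - x0) + (ya - y0) * (ya - y0)) - ((x0 - x1) * (x0 - x1) + (y0 - y1) * (y0 - y1)))
       * / (2 * D))
     = h * h) by (unfold h, D; field; exact HD).
  rewrite HY, Rinv_r, sqrt_1, Rmult_1_r by (apply Rmult_integral_contrapositive; auto).
  repeat split; auto; unfold h, D; field; exact HD.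
Qed.

Lemma C2_base2 : C2 base2.
Proof.
  unfold base2, base_dx, base_dy. destruct (C2_chain 1), (C2_chain (n - 1)).
  apply C2_add; apply C2_mul; apply C2_sub; auto.
Qed.

Lemma closing_nbhd : exists dl, 0 < dl /\
  forall s, Rabs (s - 0) < dl -> 0 < base2 s /\ 0 < height2 s.
Proof.
  destruct closing_at_0 as [HD0 [Hh0 [HY0 _]]].
  destruct (C2_derivable _ C2_base2 0) as [b DD].
  assert (DY : exists v, derivable_pt_lim height2 0 v).
  { assert (Dinv : derivable_pt_lim (fun s => / base2 s) 0 (- / (base2 0 * base2 0) * b))
      by (apply (dlim_comp Rinv); [exact DD|apply dlim_inv; lra]).
    assert (Dinv2 : derivable_pt_lim (fun s => / (2 * base2 s)) 0
                      (- / ((2 * base2 0) * (2 * base2 0)) * (0 * base2 0 + 2 * b)))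
      by (apply (dlim_comp Rinv (fun s => 2 * base2 s));
          [apply dlim_mul; [apply dlim_const|exact DD]|apply dlim_inv; lra]).
    eexists. unfold height2, foot.
    apply dlim_sub; [apply dlim_mul; [apply dlim_const|exact Dinv]|].
    apply dlim_mul; (apply dlim_mul; [|exact Dinv2]);
      (apply dlim_sub; [apply dlim_add; [exact DD|apply dlim_const]|apply dlim_const]). }
  destruct DY as [v DY].
  destruct (dlim_cont_pos base2 0 b DD HD0) as [d1 [Hd1 P1]].
  destruct (dlim_cont_pos height2 0 v DY) as [d2 [Hd2 P2]]; [rewrite HY0; nra|].
  exists (Rmin d1 d2). split; [apply Rmin_pos; auto|].
  intros s Hs. split; [apply P1|apply P2]; eapply Rlt_le_trans; eauto; [apply Rmin_l|apply Rmin_r].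
Qed.

Section Squashed.
Variable dl : R.
Hypothesis Hdl : 0 < dl /\ forall s, Rabs (s - 0) < dl -> 0 < base2 s /\ 0 < height2 s.

Definition tangent_curve (t : R) (i : nat) : R * R :=
  if Nat.eqb i 0 then (apex_x (squash dl t), apex_y (squash dl t))
  else (chain_x i (squash dl t), chain_y i (squash dl t)).

Lemma squash_closing t : 0 < base2 (squash dl t) /\ 0 < height2 (squash dl t).
Proof. destruct Hdl as [H1 H2]. apply H2, squash_bound, H1. Qed.

Lemma height_sq s : 0 <= height2 s -> height s * height s = height2 s.
Proof.
  intros H. destruct closing_at_0 as [_ [Hh0 [HY0 _]]].
  unfold height. replace (height0 * sqrt (height2 s * / height2 0) * (height0 * sqrt (height2 s * / height2 0)))
    with (height0 * height0 * (sqrt (height2 s * / height2 0) * sqrt (height2 s * / height2 0))) by ring.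
  rewrite sqrt_sqrt, HY0; [field; exact Hh0|].
  apply Rmult_le_pos; auto. rewrite HY0. left. apply Rinv_0_lt_compat. nra.
Qed.

Lemma tangent_curve_in_L t : in_L n l (tangent_curve t).
Proof.
  set (s := squash dl t). destruct (squash_closing t) as [HD HY]. fold s in HD, HY.
  assert (Apex : dist2 (chain_x (n - 1) s, chain_y (n - 1) s) (apex_x s, apex_y s)
                   = l (n - 1)%nat * l (n - 1)%nat /\
                 dist2 (apex_x s, apex_y s) (chain_x 1 s, chain_y 1 s) = l 0%nat * l 0%nat).
  { apply two_circle_point; [exact HD|]. rewrite height_sq by lra. reflexivity. }
  intros i Hi. rewrite dist_dist2, <- (sqrt_square (l i)) by (apply (in_L_nonneg n l P); auto).
  f_equal. unfold tangent_curve. fold s.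
  destruct (Nat.eq_dec i 0) as [->|Hi0]; [rewrite next_succ by lia; apply Apex|].
  destruct (Nat.eqb_spec i 0); [lia|].
  destruct (Nat.eq_dec (S i) n) as [E|E].
  - rewrite (next_wrap n i E). replace i with (n - 1)%nat by lia. apply Apex.
  - rewrite (next_succ n i) by lia. destruct (Nat.eqb_spec (S i) 0); [lia|]. apply chain_edge; lia.
Qed.

Lemma C2_tangent_curve i : C2 (fun t => fst (tangent_curve t i)) /\ C2 (fun t => snd (tangent_curve t i)).
Proof.
  assert (Sq : forall F, C2 F -> C2 (fun t => F (squash dl t)))
    by (intros; apply C2_comp; auto using C2_squash).
  assert (Ch : forall q, C2 (fun t => chain_x q (squash dl t)) /\ C2 (fun t => chain_y q (squash dl t)))
    by (intro q; destruct (C2_chain q); split; apply Sq; auto).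
  assert (Bpos : forall t, base2 (squash dl t) <> 0)
    by (intro t; pose proof (squash_closing t); lra).
  assert (Bs : C2 (fun t => base2 (squash dl t))) by (apply Sq, C2_base2).
  assert (Fs : C2 (fun t => foot (squash dl t))).
  { unfold foot. apply C2_mul; [apply C2_sub; [apply C2_add|]; auto using C2_const|].
    apply C2_inv; [intro t; specialize (Bpos t); lra|apply C2_mul; auto using C2_const]. }
  assert (Hs : C2 (fun t => height (squash dl t))).
  { unfold height. apply C2_mul; [apply C2_const|]. apply C2_sqrt.
    - intro t. destruct closing_at_0 as [_ [Hh0 [HY0 _]]]. pose proof (squash_closing t) as [_ Y].
      apply Rmult_lt_0_compat; auto. apply Rinv_0_lt_compat. rewrite HY0. nra.
    - apply C2_mul; [|apply C2_const]. unfold height2.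
      apply C2_sub; [apply C2_mul; [apply C2_const|apply C2_inv; auto]|apply C2_mul; auto]. }
  unfold tangent_curve. destruct (Nat.eqb i 0); simpl; [|apply Ch].
  unfold apex_x, apex_y, base_dx, base_dy.
  destruct (Ch 1%nat), (Ch (n - 1)%nat).
  split; [apply C2_sub; [apply C2_add|]|apply C2_add; [apply C2_add|]];
    auto; apply C2_mul; auto; apply C2_sub; auto.
Qed.

Lemma tangent_curve_at_0 : agree n (tangent_curve 0) P.
Proof.
  destruct closing_at_0 as [_ [_ [_ [Px Py]]]].
  intros i Hi. unfold tangent_curve. rewrite squash_0.
  destruct (Nat.eqb_spec i 0) as [->|]; [rewrite Px, Py|destruct (chain_at_0 i) as [-> ->]];
    symmetry; apply surjective_pairing.
Qed.

Lemma tangent_curve_vel_chain i : (1 <= i)%nat -> (i < n)%nat ->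
  derivable_pt_lim (fun t => fst (tangent_curve t i)) 0 (fst (u i)) /\
  derivable_pt_lim (fun t => snd (tangent_curve t i)) 0 (snd (u i)).
Proof.
  intros H1 H2. destruct (chain_derivative_0 i H1 H2) as [A B].
  unfold tangent_curve. destruct (Nat.eqb_spec i 0); [lia|]. simpl.
  split; (eapply dlim_eq; [|apply dlim_comp; [apply squash_derivative_0, Hdl|rewrite squash_0; eauto]]);
    ring.
Qed.

Lemma tangent_curve_realizes : tangent n l P u.
Proof.
  destruct (build_curve_vel n tangent_curve) as [g1 Hcv]; [intros; apply C2_tangent_curve|].
  exists tangent_curve, g1. repeat split; auto using tangent_curve_in_L, tangent_curve_at_0.
  destruct (curve_vel_has_vel n _ _ Hcv) as [Hv _].
  assert (Vchain : forall i, (1 <= i)%nat -> (i < n)%nat -> g1 0 i = u i).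
  { intros i H1 H2. destruct (tangent_curve_vel_chain i H1 H2), (Hv 0 i H2).
    rewrite (surjective_pairing (g1 0 i)), (surjective_pairing (u i)).
    f_equal; eapply uniqueness_limite; eauto. }
  intros i Hi. destruct (Nat.eq_dec i 0) as [->|Hi0]; [|apply Vchain; lia].
  (* both edges at vertex [0] have stationary length, and they are not parallel *)
  pose proof (curve_edges_orthogonal n l _ g1 Hv tangent_curve_in_L 0 (n - 1) ltac:(lia)) as T1.
  pose proof (curve_edges_orthogonal n l _ g1 Hv tangent_curve_in_L 0 0 ltac:(lia)) as T2.
  pose proof (Hu (n - 1)%nat ltac:(lia)) as U1. pose proof (Hu 0%nat ltac:(lia)) as U2.
  unfold edge_stretch, edx, edy, dist2_var in *.
  rewrite (next_wrap n (n - 1)) in * by lia. rewrite (next_succ n 0) in * by lia.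
  rewrite !tangent_curve_at_0 in T1, T2 by lia.
  rewrite (Vchain (n - 1)%nat) in T1 by lia. rewrite (Vchain 1%nat) in T2 by lia.
  destruct (orthogonal_pair_zero
              (fst (P 0%nat) - fst (P (n - 1)%nat)) (snd (P 0%nat) - snd (P (n - 1)%nat))
              (fst (P 1%nat) - fst (P 0%nat)) (snd (P 1%nat) - snd (P 0%nat))
              (fst (g1 0 0%nat) - fst (u 0%nat)) (snd (g1 0 0%nat) - snd (u 0%nat)))
    as [Zx Zy]; [lra|lra|exact turn_at_0|].
  rewrite (surjective_pairing (g1 0 0%nat)), (surjective_pairing (u 0%nat)). f_equal; lra.
Qed.

End Squashed.

Lemma tangent_of_turn0 : tangent n l P u.
Proof. destruct closing_nbhd as [dl Hdl]. exact (tangent_curve_realizes dl Hdl). Qed.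

End TangentCurve.

Definition shift (n q i : nat) : nat := if Nat.ltb (i + q) n then (i + q)%nat else (i + q - n)%nat.

Lemma shift_lt n q i : (q <= n)%nat -> (i < n)%nat -> (shift n q i < n)%nat.
Proof. intros. unfold shift. destruct (Nat.ltb_spec (i + q) n); lia. Qed.

Lemma shift_next n q i : (q <= n)%nat -> (i < n)%nat -> next n (shift n q i) = shift n q (next n i).
Proof.
  intros Hq Hi. unfold shift.
  destruct (Nat.eq_dec (S i) n) as [E|E]; [rewrite (next_wrap n i E)|rewrite (next_succ n i) by lia];
  repeat match goal with |- context [Nat.ltb ?a ?b] => destruct (Nat.ltb_spec a b) end;
  match goal with |- next n ?x = _ => destruct (Nat.eq_dec (S x) n);
    [rewrite (next_wrap n x) by lia | rewrite (next_succ n x) by lia] end; lia.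
Qed.

Lemma shift_inv n p i : (p < n)%nat -> (i < n)%nat -> shift n p (shift n (n - p) i) = i.
Proof.
  intros Hp Hi. unfold shift.
  destruct (Nat.ltb_spec (i + (n - p)) n), (Nat.ltb_spec (i + (n - p) + p) n),
    (Nat.ltb_spec (i + (n - p) - n + p) n); lia.
Qed.

(** Renumbering the vertices cyclically reduces to the vertex [0]. *)
Lemma tangent_of_turn n l (P u : config) k :
  (3 <= n)%nat -> in_L n l P -> (forall i, (i < n)%nat -> edge2 n P i <> 0) -> lin_tangent n P u ->
  (k < n)%nat -> turn n P k <> 0 -> tangent n l P u.
Proof.
  intros Hn3 HL Hedge Hu Hk Hturn.
  set (p := next n k). assert (Hp : (p < n)%nat) by (apply next_lt; auto).
  set (Q := fun i => P (shift n p i)). set (l' := fun i => l (shift n p i)).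
  set (u' := fun i => u (shift n p i)).
  assert (Sn : forall i, (i < n)%nat -> next n (shift n p i) = shift n p (next n i))
    by (intros; apply shift_next; lia).
  assert (Sh1 : shift n p (n - 1) = k).
  { unfold p, shift. destruct (Nat.eq_dec (S k) n) as [E|E];
      [rewrite next_wrap by auto|rewrite next_succ by lia];
      match goal with |- context [Nat.ltb ?a ?b] => destruct (Nat.ltb_spec a b) end; lia. }
  destruct (tangent_of_turn0 n Q u' l' Hn3) as [h [h1 [Hc [HLh [A0 A1]]]]].
  - intros i Hi. unfold Q, l'. rewrite <- Sn by auto. apply HL, shift_lt; lia.
  - intros i Hi. unfold edge2, edx, edy, Q. rewrite <- Sn by auto. apply Hedge, shift_lt; lia.
  - intros i Hi. unfold edge_stretch, edx, edy, Q, u'. rewrite <- Sn by auto. apply Hu, shift_lt; lia.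
  - unfold turn, Q. repeat rewrite <- Sn by (repeat apply next_lt; lia). rewrite Sh1. exact Hturn.
  - set (q := (n - p)%nat).
    assert (Sq : forall i, (i < n)%nat -> (shift n q i < n)%nat) by (intros; apply shift_lt; lia).
    assert (Inv : forall i, (i < n)%nat -> shift n p (shift n q i) = i) by (intros; apply shift_inv; auto).
    exists (fun t i => h t (shift n q i)), (fun t i => h1 t (shift n q i)). split; [|split; [|split]].
    + destruct Hc as [h2 Hc]. exists (fun t i => h2 t (shift n q i)).
      intros i Hi t. apply (Hc _ (Sq i Hi) t).
    + intros t i Hi. rewrite <- shift_next by lia. rewrite (HLh t _ (Sq i Hi)). unfold l'. rewrite Inv; auto.
    + intros i Hi. rewrite (A0 _ (Sq i Hi)). unfold Q. rewrite Inv; auto.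
    + intros i Hi. rewrite (A1 _ (Sq i Hi)). unfold u'. rewrite Inv; auto.
Qed.

Lemma parallel_decomp (dx dy vx vy : R) : dx * vy - dy * vx = 0 -> dx * dx + dy * dy <> 0 ->
  vx = (vx * dx + vy * dy) / (dx * dx + dy * dy) * dx /\
  vy = (vx * dx + vy * dy) / (dx * dx + dy * dy) * dy.
Proof.
  intros H E. split; apply (Rmult_eq_reg_r (dx * dx + dy * dy)); auto; field_simplify; auto.
  - replace (vx * dx ^ 2 + vx * dy ^ 2) with ((vx * dx + vy * dy) * dx - dy * (dx * vy - dy * vx))
      by ring. rewrite H. ring.
  - replace (vy * dx ^ 2 + vy * dy ^ 2) with ((vx * dx + vy * dy) * dy + dx * (dx * vy - dy * vx))
      by ring. rewrite H. ring.
Qed.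

(** Writing [c - b = t (b - a)], both [b - a] and [t (b - a)] are chords ending at [b], which
    forces [t (t + 1) = 0]. *)
Lemma collinear_on_circle_eq (ax ay bx by0 cx cy ox oy r2 : R) :
  (ax - ox) * (ax - ox) + (ay - oy) * (ay - oy) = r2 ->
  (bx - ox) * (bx - ox) + (by0 - oy) * (by0 - oy) = r2 ->
  (cx - ox) * (cx - ox) + (cy - oy) * (cy - oy) = r2 ->
  (bx - ax) * (bx - ax) + (by0 - ay) * (by0 - ay) <> 0 ->
  (cx - bx) * (cx - bx) + (cy - by0) * (cy - by0) <> 0 ->
  (bx - ax) * (cy - by0) - (by0 - ay) * (cx - bx) = 0 ->
  ax = cx /\ ay = cy.
Proof.
  intros NA NB NC Hd Hv Cr.
  destruct (parallel_decomp _ _ _ _ Cr Hd) as [Vx Vy].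
  set (t := ((cx - bx) * (bx - ax) + (cy - by0) * (by0 - ay)) /
            ((bx - ax) * (bx - ax) + (by0 - ay) * (by0 - ay))) in Vx, Vy.
  set (dx := bx - ax) in *. set (dy := by0 - ay) in *.
  replace cx with (bx + t * dx) in * by lra. replace cy with (by0 + t * dy) in * by lra.
  replace ax with (bx - dx) in * by (unfold dx; ring). replace ay with (by0 - dy) in * by (unfold dy; ring).
  assert (Ht : t <> 0) by (intro H0; apply Hv; rewrite H0; ring).
  assert (G : t * (1 + t) * (dx * dx + dy * dy) = 0) by nra.
  apply Rmult_integral in G as [G|G]; [|contradiction].
  apply Rmult_integral in G as [G|G]; [contradiction|].
  replace t with (-1) by lra. split; ring.
Qed.

Section Main.
Variables (n : nat) (l : nat -> R) (P : config) (O : R * R) (r : R).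
Hypothesis Hl : forall i, (i < n)%nat -> 0 < l i.
Hypothesis HL : in_L n l P.
Hypothesis Hoc : on_circle n P O r.
Hypothesis Hant : forall i, (i < n)%nat -> P (next n i) <> antipode O (P i).
Hypothesis Hnc : ~ collinear n P.

Lemma r_pos : 0 < r.
Proof. destruct Hoc; auto. Qed.

Lemma pc_norm i : (i < n)%nat -> pcx P O i * pcx P O i + pcy P O i * pcy P O i = r * r.
Proof.
  intros Hi. destruct Hoc as [H0 H]. pose proof (H i Hi) as E. rewrite dist_dist2 in E.
  unfold dist2, pcx, pcy in *. rewrite <- E, sqrt_sqrt by (apply Rplus_le_le_0_compat; apply Rle_0_sqr).
  ring.
Qed.

Lemma edge2_neq0 i : (i < n)%nat -> edge2 n P i <> 0.
Proof.
  intros Hi Z. pose proof (in_L_dist2 n l P i HL Hi) as E. pose proof (Hl i Hi).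
  unfold edge2, edx, edy, dist2 in *.
  assert (l i * l i = 0) by (rewrite <- E, <- Z; ring). nra.
Qed.

Lemma n_pos : (0 < n)%nat.
Proof. destruct n; [|lia]. exfalso. apply Hnc. exists 1, 0, 0. split; [left; lra|]. intros; lia. Qed.

Lemma not_antipodal_sq i : (i < n)%nat ->
  (pcx P O i + pcx P O (next n i)) * (pcx P O i + pcx P O (next n i)) +
  (pcy P O i + pcy P O (next n i)) * (pcy P O i + pcy P O (next n i)) <> 0.
Proof.
  intros Hi Z. apply (Hant i Hi).
  destruct (Rplus_sqr_eq_0 (pcx P O i + pcx P O (next n i)) (pcy P O i + pcy P O (next n i)))
    as [A B]; [unfold Rsqr; exact Z|].
  unfold pcx, pcy, antipode in *. rewrite (surjective_pairing (P (next n i))). f_equal; lra.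
Qed.

Lemma pc_cross_neq0 i : (i < n)%nat ->
  pcx P O i * pcy P O (next n i) - pcy P O i * pcx P O (next n i) <> 0.
Proof.
  intros Hi. apply (cross_neq0_on_circle _ _ _ _ r); auto using pc_norm, next_lt, not_antipodal_sq.
  pose proof (edge2_neq0 i Hi) as E. unfold edge2 in E. rewrite (edx_pc n P O), (edy_pc n P O) in E. exact E.
Qed.

Lemma midpoint_coef_eq i : (i < n)%nat ->
  midpoint_coef n P O i =
  - (pcx P O i * pcy P O (next n i) - pcy P O i * pcx P O (next n i)) /
  (r * r - (pcx P O i * pcx P O (next n i) + pcy P O i * pcy P O (next n i))).
Proof.
  intros Hi. pose proof (edge2_neq0 i Hi) as E.
  pose proof (pc_norm i Hi) as N1. pose proof (pc_norm _ (next_lt n i Hi)) as N2.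
  unfold midpoint_coef, edge2 in *. rewrite (edx_pc n P O), (edy_pc n P O) in *.
  set (a := pcx P O i) in *. set (b := pcy P O i) in *.
  set (c := pcx P O (next n i)) in *. set (d := pcy P O (next n i)) in *.
  replace ((c - a) * (c - a) + (d - b) * (d - b)) with (2 * (r * r - (a * c + b * d))) in * by nra.
  field. lra.
Qed.

Lemma midpoint_coef_neq0 i : (i < n)%nat -> midpoint_coef n P O i <> 0.
Proof.
  intros Hi. rewrite midpoint_coef_eq by auto. unfold Rdiv. apply Rmult_integral_contrapositive.
  split; [apply Ropp_neq_0_compat, pc_cross_neq0; auto|apply Rinv_neq_0_compat].
  pose proof (edge2_neq0 i Hi) as E. pose proof (pc_norm i Hi). pose proof (pc_norm _ (next_lt n i Hi)).
  unfold edge2 in E. rewrite (edx_pc n P O), (edy_pc n P O) in E. intro Z. apply E. nra.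
Qed.

Lemma eps_tan_alpha i : (i < n)%nat -> eps n O P i * tan (alpha n O P i) = - / midpoint_coef n P O i.
Proof.
  intros Hi. rewrite midpoint_coef_eq by auto.
  unfold eps, alpha, uangle, cross, vsub. cbn [fst snd].
  fold (pcx P O i) (pcy P O i) (pcx P O (next n i)) (pcy P O (next n i)).
  replace ((fst (P (next n i)) - fst (P i)) * (snd O - snd (P i)) -
           (snd (P (next n i)) - snd (P i)) * (fst O - fst (P i)))
    with (pcx P O i * pcy P O (next n i) - pcy P O i * pcx P O (next n i)) by (unfold pcx, pcy; ring).
  rewrite (eps_tan_half_angle _ _ _ _ r); auto using r_pos, pc_norm, next_lt, pc_cross_neq0.
  pose proof (pc_cross_neq0 i Hi). pose proof (midpoint_coef_neq0 i Hi) as M.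
  rewrite midpoint_coef_eq in M by auto.
  field. split; auto. intro Z. apply M. rewrite Z. unfold Rdiv. rewrite Rinv_0. ring.
Qed.

Lemma bifurcating_iff : bifurcating n O P <-> chord_sum n P O (fun _ => 1) = 0.
Proof.
  unfold bifurcating, chord_sum.
  rewrite (rsum_ext n _ (fun i => - / midpoint_coef n P O i)) by (intros; apply eps_tan_alpha; auto).
  rewrite (rsum_ext n (fun i => (1 + 1) / midpoint_coef n P O i) (fun i => 2 * / midpoint_coef n P O i))
    by (intros; unfold Rdiv; ring).
  rewrite rsum_opp, rsum_scal. split; intro; lra.
Qed.

Lemma n_ge3 : (3 <= n)%nat.
Proof.
  destruct (Compare_dec.le_lt_dec 3 n) as [H|H]; [exact H|]. exfalso. apply Hnc.
  set (a := snd (P 1%nat) - snd (P 0%nat)). set (b := fst (P 0%nat) - fst (P 1%nat)).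
  destruct (Req_dec a 0) as [Ea|Ea]; [destruct (Req_dec b 0) as [Eb|Eb]|].
  - exists 1, 0, (fst (P 0%nat)). split; [left; lra|]. intros i Hi.
    assert (i = 0 \/ i = 1)%nat as [->| ->] by lia; unfold b in Eb; lra.
  - exists a, b, (a * fst (P 0%nat) + b * snd (P 0%nat)). split; [right; exact Eb|].
    intros i Hi. assert (i = 0 \/ i = 1)%nat as [->| ->] by lia; [ring|unfold a, b; ring].
  - exists a, b, (a * fst (P 0%nat) + b * snd (P 0%nat)). split; [left; exact Ea|].
    intros i Hi. assert (i = 0 \/ i = 1)%nat as [->| ->] by lia; [ring|unfold a, b; ring].
Qed.

(** Otherwise every vertex equals the one two steps ahead, so the polygon only has the
    vertices [P 0] and [P 1]. *)
Lemma exists_turn : exists k, (k < n)%nat /\ turn n P k <> 0.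
Proof.
  apply Classical_Prop.NNPP. intro H. pose proof n_ge3 as H3.
  assert (Eq : forall k, (k < n)%nat -> P k = P (next n (next n k))).
  { intros k Hk. pose proof (next_lt n k Hk) as Hk1. pose proof (next_lt n _ Hk1) as Hk2.
    assert (Z : turn n P k = 0) by (apply Classical_Prop.NNPP; intro Z; apply H; eauto).
    pose proof (pc_norm k Hk) as C0. pose proof (pc_norm _ Hk1) as C1. pose proof (pc_norm _ Hk2) as C2.
    pose proof (edge2_neq0 k Hk) as E0. pose proof (edge2_neq0 _ Hk1) as E1.
    unfold pcx, pcy, edge2, edx, edy in *.
    destruct (collinear_on_circle_eq (fst (P k)) (snd (P k)) (fst (P (next n k))) (snd (P (next n k)))
       (fst (P (next n (next n k)))) (snd (P (next n (next n k)))) (fst O) (snd O) (r * r))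
      as [A B]; auto.
    rewrite (surjective_pairing (P k)), (surjective_pairing (P (next n (next n k)))). f_equal; auto. }
  assert (All : forall k, (k < n)%nat -> P k = P 0%nat \/ P k = P 1%nat).
  { intro k. induction k as [k IH] using Wf_nat.lt_wf_ind. intros Hk.
    destruct k as [|[|k]]; auto.
    assert (E2 := Eq k ltac:(lia)). rewrite (next_succ n k), (next_succ n (S k)) in E2 by lia.
    rewrite <- E2. apply IH; lia. }
  apply Hnc.
  pose proof (edge2_neq0 0 ltac:(lia)) as E0. unfold edge2, edx, edy in E0.
  rewrite (next_succ n 0) in E0 by lia.
  set (a := snd (P 1%nat) - snd (P 0%nat)). set (b := fst (P 0%nat) - fst (P 1%nat)).
  exists a, b, (a * fst (P 0%nat) + b * snd (P 0%nat)). split.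
  - destruct (Req_dec a 0); [right|left; auto]. intro Hb. apply E0. unfold a, b in *.
    replace (fst (P 1%nat)) with (fst (P 0%nat)) by lra.
    replace (snd (P 1%nat)) with (snd (P 0%nat)) by lra. ring.
  - intros i Hi. destruct (All i Hi) as [-> | ->]; [ring|unfold a, b; ring].
Qed.

Lemma tangent_iff w : tangent n l P w <-> lin_tangent n P w.
Proof.
  split.
  - intros [g Ha]. apply (adm_area_expansion n P O r pc_norm edge2_neq0 n_pos l g w Ha).
  - intros Hw. destruct exists_turn as [k [Hk Hc]].
    apply (tangent_of_turn n l P w k n_ge3 HL edge2_neq0 Hw Hk Hc).
Qed.

Lemma hessQ_iff w q : hessQ n l P w q <-> lin_tangent n P w /\ q = hess_form n P O w.
Proof.
  split.
  - intros [g [Ha Hd]].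
    destruct (adm_area_expansion n P O r pc_norm edge2_neq0 n_pos l g w Ha) as [Hw [_ Hq]].
    split; [exact Hw|]. eapply has_d2_at0_unique; eauto.
  - intros [Hw ->]. destruct (proj2 (tangent_iff w) Hw) as [g Ha]. exists g. split; auto.
    apply (adm_area_expansion n P O r pc_norm edge2_neq0 n_pos l g w Ha).
Qed.

Lemma hess_kernel_iff w : hess_kernel n l P w <->
  lin_tangent n P w /\ forall u, lin_tangent n P u -> rsum n (hess_cross n P O w u) = 0.
Proof.
  unfold hess_kernel. rewrite tangent_iff. split.
  - intros [Hw HK]. split; auto. intros u Hu.
    pose proof (HK u _ _ _ (proj2 (hessQ_iff w _) (conj Hw eq_refl))
                  (proj2 (hessQ_iff u _) (conj Hu eq_refl))
                  (proj2 (hessQ_iff _ _) (conj (lin_tangent_vadd n P w u Hw Hu) eq_refl))) as E.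
    rewrite hess_form_vadd in E. lra.
  - intros [Hw HT]. split; auto. intros u qw qu qwu A B C.
    apply hessQ_iff in A as [_ ->]. apply hessQ_iff in B as [Hu ->]. apply hessQ_iff in C as [_ ->].
    rewrite hess_form_vadd, (HT u Hu). ring.
Qed.

Lemma orbit_tangent_rot_rate w : orbit_tangent n P w ->
  exists c, lin_tangent n P w /\ forall i, (i < n)%nat -> rot_rate n P w i = c.
Proof.
  intros [a [b [c H]]]. exists c.
  assert (Hs : forall i, (i < n)%nat ->
    w (next n i) = (fst (w i) - c * edy n P i, snd (w i) + c * edx n P i)).
  { intros i Hi. rewrite (H i Hi), (H _ (next_lt n i Hi)). unfold edx, edy. simpl. f_equal; ring. }
  split; intros i Hi; unfold edge_stretch, rot_rate; rewrite (Hs i Hi); simpl; [ring|].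
  field_simplify_eq; [unfold edge2; ring|apply edge2_neq0; auto].
Qed.

Lemma orbit_of_rot_rate_periodic w : lin_tangent n P w ->
  (forall j, (j < n)%nat -> rot_rate n P w j = rot_rate n P w (next n j)) -> orbit_tangent n P w.
Proof.
  intros Hw Hs. set (c := rot_rate n P w 0).
  assert (Pc : forall k, (k < n)%nat -> rot_rate n P w k = c).
  { induction k; intros Hk; [reflexivity|]. rewrite <- IHk, (Hs k), next_succ by lia. reflexivity. }
  assert (W : forall k, (k < n)%nat -> w k = (fst (w 0%nat) - c * (snd (P k) - snd (P 0%nat)),
                                               snd (w 0%nat) + c * (fst (P k) - fst (P 0%nat)))).
  { induction k; intros Hk.
    - rewrite (surjective_pairing (w 0%nat)). f_equal; simpl; ring.
    - destruct (lin_tangent_rot n P edge2_neq0 w k Hw ltac:(lia)) as [A B].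
      unfold edx, edy in A, B. rewrite (next_succ n k), Pc in A, B by lia.
      rewrite IHk in A, B by lia. simpl in A, B.
      rewrite (surjective_pairing (w (S k))). f_equal; lra. }
  exists (fst (w 0%nat) + c * snd (P 0%nat)), (snd (w 0%nat) - c * fst (P 0%nat)), c.
  intros i Hi. rewrite (W i Hi). f_equal; ring.
Qed.

(** An orbit vector [(a - c y, b + c x)] with constant radial component [r^2] would put all
    vertices on a line. *)
Lemma bif_field_not_orbit : ~ orbit_tangent n P (bif_field n P O).
Proof.
  intros [a [b [c H]]]. apply Hnc.
  set (Kx := a - c * snd O). set (Ky := b + c * fst O).
  assert (L : forall k, (k < n)%nat -> Kx * fst (P k) + Ky * snd (P k) = r * r + Kx * fst O + Ky * snd O).
  { intros k Hk. pose proof (H k Hk) as E. unfold bif_field, radial_field in E. injection E as E1 E2.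
    pose proof (pc_norm k Hk) as N. unfold pcx, pcy in *. unfold Kx, Ky. nra. }
  exists Kx, Ky, (r * r + Kx * fst O + Ky * snd O). split; auto.
  destruct (Req_dec Kx 0) as [Hx|Hx]; [|left; auto].
  destruct (Req_dec Ky 0) as [Hy|Hy]; [|right; auto].
  exfalso. pose proof (L 0%nat n_pos) as E. rewrite Hx, Hy in E. pose proof r_pos. nra.
Qed.

Lemma morse_not_bifurcating : morse_critical n l P -> ~ bifurcating n O P.
Proof.
  intros [_ HM] Hb. apply bifurcating_iff in Hb.
  apply bif_field_not_orbit, HM, hess_kernel_iff. split.
  - apply (radial_field_tangent n P O r); auto using pc_norm, edge2_neq0, n_pos, midpoint_coef_neq0.
  - intros u Hu. apply (bif_field_kernel n P O r); auto using pc_norm, edge2_neq0, n_pos, midpoint_coef_neq0.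
Qed.

Lemma not_bifurcating_morse : ~ bifurcating n O P -> morse_critical n l P.
Proof.
  intros Hnb. assert (H1 : chord_sum n P O (fun _ => 1) <> 0) by (rewrite <- bifurcating_iff; auto).
  split.
  - intros g w Ha. apply (adm_area_expansion n P O r pc_norm edge2_neq0 n_pos l g w Ha).
  - intros w. rewrite hess_kernel_iff. split.
    + intros [Hw HT]. apply orbit_of_rot_rate_periodic; auto.
      apply (rot_rate_periodic n P O r pc_norm edge2_neq0 n_pos midpoint_coef_neq0 r_pos); auto.
      intros u Hu. pose proof (HT u Hu) as E.
      rewrite (hess_cross_sum n P O r pc_norm edge2_neq0 n_pos) in E by auto. lra.
    + intros Ho. destruct (orbit_tangent_rot_rate w Ho) as [c [Hw Hc]]. split; auto.
      intros u Hu. rewrite (hess_cross_sum n P O r pc_norm edge2_neq0 n_pos) by auto.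
      rewrite (rsum_ext n _ (fun i => c * (radial P O u (next n i) - radial P O u i)))
        by (intros; rewrite Hc; auto).
      rewrite rsum_scal, (rsum_telescope n (radial P O u)) by apply n_pos. ring.
Qed.

End Main.

Theorem mainTheorem10 (n : nat) (l : nat -> R) (P : config)
    (O : R * R) (r : R) :
  (forall i, (i < n)%nat -> 0 < l i) ->
  in_L n l P ->
  on_circle n P O r ->
  (forall i, (i < n)%nat -> P (next n i) <> antipode O (P i)) ->
  ~ collinear n P ->
  (morse_critical n l P <-> ~ bifurcating n O P).
Proof.
  intros Hl HL Hoc Hant Hnc. split.
  - apply (morse_not_bifurcating n l P O r); auto.
  - apply (not_bifurcating_morse n l P O r); auto.
Qed.
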